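(* Let $X$ and $\mu=\mu_{(p,q,\mathcal N)}$ be as in the context, under the standing assumptions. Then: (1) For every $x\in X=\operatorname{supp}(\mu)$, $$-\frac{\log(1-p)}{\log A}\le \underline{\dim}_{\rm loc}(\mu,x)\le -\frac{\log p}{\log A}\quad\text{and}\quad -\frac{\log(1-q)}{\log B}\le \overline{\dim}_{\rm loc}(\mu,x)\le -\frac{\log q}{\log B}.$$ (2) $\underline{\dim}_{\rm loc}(\mu,x)<\overline{\dim}_{\rm loc}(\mu,x)$ for every $x\in X$; in particular the local dimension of $\mu$ exists at no point of its support. (3) For $\mu$-almost every $x\in X$, $$\underline{\dim}_{\rm loc}(\mu,x)=\frac{H(p)}{\log A},\qquad \overline{\dim}_{\rm loc}(\mu,x)=\frac{H(q)}{\log B},$$ where $H(p)=-p\log p-(1-p)\log(1-p)$. (4) $\dim_H X=\frac{\log 2}{\log A}<\dim_P X=\frac{\log 2}{\log B}$.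
   Context: Let $\mathcal A=\{0,1\}$. Fix real numbers $A>B>2$, real numbers $p,q$ with $0<p,q\le 1/2$, and a strictly increasing sequence of integers $\mathcal N=(N_i)_{i\ge 0}$ with $N_0=0$. For $n\ge 1$, call $n$ of type A if $N_{2i}<n\le N_{2i+1}$ for some $i\ge 0$, and of type B if $N_{2i+1}<n\le N_{2i+2}$ for some $i\ge0$; put $(r_n,\rho_n)=(A,p)$ if $n$ is of type A and $(r_n,\rho_n)=(B,q)$ if $n$ is of type B. Define closed intervals $I_w$, $w\in\mathcal A^n$, recursively: $I_\emptyset=[0,1]$, and if $w\in\mathcal A^{n-1}$ and $I_w=[x_w,x_w+\ell]$ then $I_{w0}=[x_w,x_w+\ell/r_n]$ and $I_{w1}=[x_w+\ell-\ell/r_n,\,x_w+\ell]$. Let $X=X(A,B,\mathcal N)=\bigcap_{n\ge1}\bigcup_{w\in\mathcal A^n}I_w$. Let $\mu=\mu_{(p,q,\mathcal N)}$ be the unique Borel probability measure on $X$ with $\mu(I_\emptyset)=1$ and, for $w\in\mathcal A^{n-1}$, $\mu(I_{w0})=\rho_n\mu(I_w)$, $\mu(I_{w1})=(1-\rho_n)\mu(I_w)$; its support is $X$. Standing assumptions: $\lim_{i\to\infty}N_{i+1}/N_i=\infty$ and $-\frac{\log p}{\log A}<-\frac{\log(1-q)}{\log B}$. For a Borel probability measure $\nu$ on $\mathbb R$ and $x$, the lower and upper local dimensions are $\underline{\dim}_{\rm loc}(\nu,x)=\liminf_{r\to0^+}\frac{\log\nu(B(x,r))}{\log r}$ and $\overline{\dim}_{\rm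 loc}(\nu,x)=\limsup_{r\to0^+}\frac{\log\nu(B(x,r))}{\log r}$, where $B(x,r)$ is the closed ball. $\dim_H$, $\dim_P$ denote Hausdorff and packing dimension. *)

From Stdlib Require Import Reals Lra List ClassicalEpsilon.
Open Scope R_scope.

Fixpoint fsum (f : nat -> R) (n : nat) : R :=
  match n with O => 0 | S k => fsum f k + f k end.

Definition is_lower_bound (E : R -> Prop) (m : R) : Prop := forall y, E y -> m <= y.
Definition is_glb (E : R -> Prop) (m : R) : Prop :=
  is_lower_bound E m /\ (forall m', is_lower_bound E m' -> m' <= m).

(** infimum of a set of reals (junk value 0 if the infimum does not exist in R) *)
Definition Rinf (E : R -> Prop) : R :=
  match excluded_middle_informative (exists m, is_glb E m) with
  | left H => proj1_sig (constructive_indefinite_description _ H)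
  | right _ => 0
  end.

(** d^s with the convention 0^s = 0 for s > 0 and 0^0 = 1 *)
Definition pw (d s : R) : R :=
  if Rlt_dec 0 d then Rpower d s else (if Req_EM_T s 0 then 1 else 0).

Definition is_liminf0 (f : R -> R) (d : R) : Prop :=
  forall eps, 0 < eps ->
    (exists delta, 0 < delta /\ forall r, 0 < r < delta -> d - eps < f r) /\
    (forall delta, 0 < delta -> exists r, 0 < r < delta /\ f r < d + eps).
Definition is_limsup0 (f : R -> R) (d : R) : Prop :=
  forall eps, 0 < eps ->
    (exists delta, 0 < delta /\ forall r, 0 < r < delta -> f r < d + eps) /\
    (forall delta, 0 < delta -> exists r, 0 < r < delta /\ d - eps < f r).

(** * Hausdorff dimension of a subset of R.
    For subsets of R, covers by arbitrary sets may be replaced by covers by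
    closed intervals [a i, b i] (same diameters). *)
Definition delta_cover (delta : R) (E : R -> Prop) (a b : nat -> R) : Prop :=
  (forall i, a i <= b i <= a i + delta) /\
  (forall x, E x -> exists i, a i <= x <= b i).

Definition Hzero (s : R) (E : R -> Prop) : Prop :=
  forall delta eps, 0 < delta -> 0 < eps ->
    exists a b, delta_cover delta E a b /\
      forall n, fsum (fun i => pw (b i - a i) s) n <= eps.

Definition dimH (E : R -> Prop) : R := Rinf (fun s => 0 <= s /\ Hzero s E).

Definition delta_packing (delta : R) (F : R -> Prop) (k : nat) (c rr : nat -> R) : Prop :=
  (forall i, (i < k)%nat -> F (c i) /\ 0 < rr i <= delta) /\
  (forall i j, (i < k)%nat -> (j < k)%nat -> i <> j -> rr i + rr j < Rabs (c i - c j)).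

(** packing premeasure  P_0^s(F) <= a ,  P_0^s(F) = lim_{delta->0} sup_packings sum (2 r_i)^s *)
Definition P0_le (s : R) (F : R -> Prop) (a : R) : Prop :=
  forall eta, 0 < eta -> exists delta, 0 < delta /\
    forall k c rr, delta_packing delta F k c rr ->
      fsum (fun i => pw (2 * rr i) s) k <= a + eta.

(** packing measure P^s(E) = inf { sum_i P_0^s(E_i) : E subset U_i E_i } = 0 *)
Definition Pzero (s : R) (E : R -> Prop) : Prop :=
  forall eps, 0 < eps ->
    exists (F : nat -> R -> Prop) (a : nat -> R),
      (forall x, E x -> exists i, F i x) /\
      (forall i, P0_le s (F i) (a i)) /\
      (forall n, fsum a n <= eps).

Definition dimP (E : R -> Prop) : R := Rinf (fun s => 0 <= s /\ Pzero s E).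

Definition typeA (N : nat -> nat) (n : nat) : Prop :=
  exists i, (N (2 * i) < n <= N (2 * i + 1))%nat.
Definition typeB (N : nat -> nat) (n : nat) : Prop :=
  exists i, (N (2 * i + 1) < n <= N (2 * i + 2))%nat.

(** (r_n, rho_n); for n >= 1 and N strictly increasing with N 0 = 0,
    "not type A" is equivalent to "type B" *)
Definition rr (A B : R) (N : nat -> nat) (n : nat) : R :=
  if excluded_middle_informative (typeA N n) then A else B.
Definition rho (p q : R) (N : nat -> nat) (n : nat) : R :=
  if excluded_middle_informative (typeA N n) then p else q.

Fixpoint lenI (A B : R) (N : nat -> nat) (n : nat) : R :=
  match n with O => 1 | S k => lenI A B N k / rr A B N (S k) end.

(** words are lists of bits (false = 0, true = 1), first letter first;
    leftI_aux w k = left endpoint offset contributed by letters k+1, k+2, ... *)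
Fixpoint leftI_aux (A B : R) (N : nat -> nat) (w : list bool) (k : nat) : R :=
  match w with
  | nil => 0
  | b :: w' => (if b then lenI A B N k - lenI A B N (S k) else 0)
               + leftI_aux A B N w' (S k)
  end.
Definition leftI (A B : R) (N : nat -> nat) (w : list bool) : R := leftI_aux A B N w 0.
Definition inI (A B : R) (N : nat -> nat) (w : list bool) (x : R) : Prop :=
  leftI A B N w <= x <= leftI A B N w + lenI A B N (length w).

Fixpoint muI_aux (p q : R) (N : nat -> nat) (w : list bool) (k : nat) : R :=
  match w with
  | nil => 1
  | b :: w' => (if b then 1 - rho p q N (S k) else rho p q N (S k)) * muI_aux p q N w' (S k)
  end.
Definition muI (p q : R) (N : nat -> nat) (w : list bool) : R := muI_aux p q N w 0.

Fixpoint words (n : nat) : list (list bool) :=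
  match n with
  | O => nil :: nil
  | S k => flat_map (fun w => (false :: w) :: (true :: w) :: nil) (words k)
  end.

Definition inX (A B : R) (N : nat -> nat) (x : R) : Prop :=
  forall n, (1 <= n)%nat -> exists w, length w = n /\ inI A B N w x.

Definition Sball (A B p q : R) (N : nat -> nat) (x r : R) (n : nat) : R :=
  fold_right Rplus 0
    (map (fun w =>
            if Rle_dec (leftI A B N w) (x + r) then
              if Rle_dec (x - r) (leftI A B N w + lenI A B N n) then muI p q N w else 0
            else 0) (words n)).

(** mu(B(x,r)) for the closed ball: mu of a compact set K is the infimum over n
    of the mass of the level-n intervals meeting K *)
Definition muBall (A B p q : R) (N : nat -> nat) (x r : R) : R :=
  Rinf (fun y => exists n, y = Sball A B p q N x r n).

Definition lower_ldim (A B p q : R) (N : nat -> nat) (x d : R) : Prop :=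
  is_liminf0 (fun r => ln (muBall A B p q N x r) / ln r) d.
Definition upper_ldim (A B p q : R) (N : nat -> nat) (x d : R) : Prop :=
  is_limsup0 (fun r => ln (muBall A B p q N x r) / ln r) d.

(** E is mu-null: for every eps it is covered by countably many intervals I_w of
    total mass <= eps (outer measure generated by mu on the I_w) *)
Definition mu_null (A B p q : R) (N : nat -> nat) (E : R -> Prop) : Prop :=
  forall eps, 0 < eps -> exists c : nat -> list bool,
    (forall x, E x -> exists i, inI A B N (c i) x) /\
    (forall n, fsum (fun i => muI p q N (c i)) n <= eps).

Definition entropy (t : R) : R := - t * ln t - (1 - t) * ln (1 - t).

From Stdlib Require Import Reals Lra Lia List Arith ClassicalEpsilon Classical.
Open Scope R_scope.

(* A point x of X has a binary address, and the ball B(x,r) is comparable to the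
   address cylinder I_{x|n} with |I_n| ~ r, because distinct level-n intervals are
   separated by gaps of length at least (B-2)|I_n|.  So the ratio
   log mu(B(x,r)) / log r is, up to o(1), the ratio -log mu(I_{x|n}) / -log |I_n| of
   two sums of per-digit terms: digit k contributes between -log(1-rho_k) and
   -log rho_k to the numerator and log r_k to the denominator.  Since
   N_{i+1}/N_i -> oo, at n = N_{2i+1} both sums are dominated by the A-block just
   completed and at n = N_{2i+2} by the B-block, which gives (1) and, with the
   standing inequality, (2).
   For (3), the numerator minus its mean sum_k H(rho_k) is a sum of centred
   independent steps, so its fourth moment is O(n^2); the levels where it exceeds
   n^(7/2) carry mass O(n^(-3/2)), which is summable, and off these cylinders the
   same block argument applied to sum_k H(rho_k) gives H(p)/log A and H(q)/log B.
   For (4), at n = N_{2i+1} the 2^n intervals of length about A^(-n) are a cheap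
   cover, while an interval U meets at most C 2^m |U|^s level-m intervals when
   s log A <= log 2, which with compactness bounds every cover from below.  At
   n = N_{2i+2} one packs 2^n disjoint balls of radius about B^(-n) centred in X;
   hence a set of finite packing premeasure misses a subcylinder of every
   cylinder, and nesting these along a countable decomposition of X produces a
   point of X in none of the pieces. *)

Lemma glb_exists (E : R -> Prop) : (exists y, E y) -> (exists m, is_lower_bound E m) -> exists m, is_glb E m.
Proof.
  intros [y Hy] [m Hm].
  destruct (completeness (fun z => E (-z))) as [l [Hl1 Hl2]].
  - exists (-m). intros z Hz. specialize (Hm _ Hz). lra.
  - exists (-y). rewrite Ropp_involutive; auto.
  - exists (-l). split.
    + intros z Hz. assert (-z <= l) by (apply Hl1; rewrite Ropp_involutive; auto). lra.
    + intros m' Hm'. assert (l <= -m'). { apply Hl2. intros z Hz. specialize (Hm' _ Hz). lra. } lra.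
Qed.

Lemma Rinf_glb E : (exists y, E y) -> (exists m, is_lower_bound E m) -> is_glb E (Rinf E).
Proof.
  intros H1 H2. unfold Rinf. destruct (excluded_middle_informative _) as [H|H].
  - exact (proj2_sig (constructive_indefinite_description _ H)).
  - exfalso; apply H; apply glb_exists; auto.
Qed.

Lemma glb_unique E m1 m2 : is_glb E m1 -> is_glb E m2 -> m1 = m2.
Proof.
  intros [H1 H2] [H3 H4]. apply Rle_antisym; auto.
Qed.

Lemma Rinf_unique E m : is_glb E m -> Rinf E = m.
Proof.
  intros H. unfold Rinf. destruct (excluded_middle_informative _) as [H'|H'].
  - apply (glb_unique E); auto. exact (proj2_sig (constructive_indefinite_description _ H')).
  - exfalso; apply H'; eauto.
Qed.

Lemma glb_threshold (Z : R -> Prop) s0 : 0 <= s0 ->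
  (forall s, s0 < s -> Z s) -> (forall s, 0 <= s < s0 -> ~ Z s) ->
  is_glb (fun s => 0 <= s /\ Z s) s0.
Proof.
  intros H0 H1 H2. split.
  - intros y [Hy HZ]. destruct (Rle_dec s0 y) as [|Hn]; auto. exfalso; apply (H2 y); auto; lra.
  - intros m Hm. destruct (Rle_dec m s0) as [|Hn]; auto. exfalso.
    assert (m <= (s0 + m)/2); [|lra]. apply Hm. split; [lra|]. apply H1; lra.
Qed.

Definition eventually_ge (f : R -> R) c := exists delta, 0 < delta /\ forall r, 0 < r < delta -> c <= f r.

Lemma liminf_exists f : (exists c, eventually_ge f c) ->
  (exists U, forall delta, 0 < delta -> exists r, 0 < r < delta /\ f r <= U) -> exists d, is_liminf0 f d.
Proof.
  intros [c0 Hc0] [U HU].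
  destruct (completeness (eventually_ge f)) as [l [Hl1 Hl2]].
  - exists U. intros c [delta [Hd Hc]]. destruct (HU delta Hd) as [r [Hr Hf]].
    specialize (Hc r Hr). lra.
  - exists c0; auto.
  - exists l. intros eps Heps. split.
    + destruct (classic (exists c, eventually_ge f c /\ l - eps < c)) as [[c [[delta [Hd Hc]] Hlc]]|Hn].
      * exists delta; split; auto. intros r Hr. specialize (Hc r Hr). lra.
      * exfalso. assert (l <= l - eps); [|lra]. apply Hl2. intros c Hc.
        destruct (Rle_dec c (l - eps)); auto. exfalso; apply Hn; exists c; split; auto; lra.
    + intros delta Hd. destruct (classic (exists r, 0 < r < delta /\ f r < l + eps)) as [H|H]; auto.
      exfalso. assert (l + eps <= l); [|lra]. apply Hl1. exists delta; split; auto.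
      intros r Hr. destruct (Rle_dec (l + eps) (f r)); auto. exfalso; apply H; exists r; split; auto; lra.
Qed.

Lemma limsup_of_liminf f e : is_liminf0 (fun r => - f r) e -> is_limsup0 f (- e).
Proof.
  intros H eps Heps. destruct (H eps Heps) as [[delta [Hd H1]] H2]. split.
  - exists delta; split; auto. intros r Hr. specialize (H1 r Hr). lra.
  - intros delta' Hd'. destruct (H2 delta' Hd') as [r [Hr Hf]]. exists r; split; auto; lra.
Qed.

Lemma liminf_ge f d c : is_liminf0 f d -> (forall eps, 0 < eps -> exists delta, 0 < delta /\ forall r, 0 < r < delta -> c - eps < f r) -> c <= d.
Proof.
  intros H1 H2. destruct (Rle_dec c d) as [|Hn]; auto. exfalso.
  set (eps := (c - d) / 3).
  destruct (H2 eps ltac:(unfold eps; lra)) as [delta [Hd Hf]].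
  destruct (proj2 (H1 eps ltac:(unfold eps; lra)) delta Hd) as [r [Hr Hf']].
  specialize (Hf r Hr). unfold eps in *. lra.
Qed.

Lemma liminf_le f d c : is_liminf0 f d -> (forall eps, 0 < eps -> forall delta, 0 < delta -> exists r, 0 < r < delta /\ f r < c + eps) -> d <= c.
Proof.
  intros H1 H2. destruct (Rle_dec d c) as [|Hn]; auto. exfalso.
  set (eps := (d - c) / 3).
  destruct (proj1 (H1 eps ltac:(unfold eps; lra))) as [delta [Hd Hf]].
  destruct (H2 eps ltac:(unfold eps; lra) delta Hd) as [r [Hr Hf']].
  specialize (Hf r Hr). unfold eps in *. lra.
Qed.

Lemma limsup_le f d c : is_limsup0 f d -> (forall eps, 0 < eps -> exists delta, 0 < delta /\ forall r, 0 < r < delta -> f r < c + eps) -> d <= c.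
Proof.
  intros H1 H2. destruct (Rle_dec d c) as [|Hn]; auto. exfalso.
  set (eps := (d - c) / 3).
  destruct (H2 eps ltac:(unfold eps; lra)) as [delta [Hd Hf]].
  destruct (proj2 (H1 eps ltac:(unfold eps; lra)) delta Hd) as [r [Hr Hf']].
  specialize (Hf r Hr). unfold eps in *. lra.
Qed.

Lemma limsup_ge f d c : is_limsup0 f d -> (forall eps, 0 < eps -> forall delta, 0 < delta -> exists r, 0 < r < delta /\ c - eps < f r) -> c <= d.
Proof.
  intros H1 H2. destruct (Rle_dec c d) as [|Hn]; auto. exfalso.
  set (eps := (c - d) / 3).
  destruct (proj1 (H1 eps ltac:(unfold eps; lra))) as [delta [Hd Hf]].
  destruct (H2 eps ltac:(unfold eps; lra) delta Hd) as [r [Hr Hf']].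
  specialize (Hf r Hr). unfold eps in *. lra.
Qed.

Lemma ln_le x y : 0 < x -> x <= y -> ln x <= ln y.
Proof. intros Hx [H|H]; [left; apply ln_increasing; auto| subst; lra]. Qed.

Lemma ln_lt_0 x : 0 < x -> x < 1 -> ln x < 0.
Proof. intros; rewrite <- ln_1; apply ln_increasing; auto. Qed.

Lemma ln_le_0 x : 0 < x -> x <= 1 -> ln x <= 0.
Proof. intros; rewrite <- ln_1; apply ln_le; auto. Qed.

Lemma ln_gt_0 x : 1 < x -> 0 < ln x.
Proof. intros; rewrite <- ln_1; apply ln_increasing; lra. Qed.

Lemma exp_le x y : x <= y -> exp x <= exp y.
Proof. intros [H|H]; [left; apply exp_increasing; auto| subst; lra]. Qed.

Lemma Rpower_pos x s : 0 < Rpower x s.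
Proof. unfold Rpower; apply exp_pos. Qed.

Lemma Rpower_mul x y s : 0 < x -> 0 < y -> Rpower (x * y) s = Rpower x s * Rpower y s.
Proof. intros; rewrite Rpower_mult_distr; auto. Qed.

Lemma Rpower_pow_base x n s : 0 < x -> Rpower (x ^ n) s = (Rpower x s) ^ n.
Proof.
  intros Hx. induction n. simpl. unfold Rpower. rewrite ln_1, Rmult_0_r, exp_0; reflexivity.
  simpl. rewrite Rpower_mul, IHn; auto. apply pow_lt; auto.
Qed.

Lemma pow2_exp n : 2 ^ n = exp (INR n * ln 2).
Proof. rewrite <- Rpower_pow by lra. reflexivity. Qed.

Lemma pw_pos d s : 0 < d -> pw d s = Rpower d s.
Proof. intros H; unfold pw; destruct (Rlt_dec 0 d); [auto| lra]. Qed.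

Lemma pw_zero s : s <> 0 -> pw 0 s = 0.
Proof. intros H; unfold pw; destruct (Rlt_dec 0 0); [lra|]. destruct (Req_EM_T s 0); [contradiction| auto]. Qed.

Lemma pw_nonneg d s : 0 <= pw d s.
Proof. unfold pw; destruct (Rlt_dec 0 d); [left; apply Rpower_pos|]. destruct (Req_EM_T s 0); lra. Qed.

Lemma pw_s0 d : pw d 0 = 1.
Proof. unfold pw; destruct (Rlt_dec 0 d). apply Rpower_O; auto. destruct (Req_EM_T 0 0); [auto| lra]. Qed.

Lemma not_Hzero_0 (E : R -> Prop) : ~ Hzero 0 E.
Proof.
  intros HZ. destruct (HZ 1 (1/2) ltac:(lra) ltac:(lra)) as [a [b [_ Hsum]]].
  specialize (Hsum 1%nat). simpl in Hsum. rewrite pw_s0 in Hsum. lra.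
Qed.

Lemma Rmax_root_bounds s d e : 0 < s -> 0 <= d -> 0 < e ->
  0 < Rmax d (Rpower e (/ s)) /\ d <= Rmax d (Rpower e (/ s)) /\
  Rpower (Rmax d (Rpower e (/ s))) s <= pw d s + e.
Proof.
  intros Hs Hd He.
  assert (Hroot : Rpower (Rpower e (/ s)) s = e).
  { rewrite Rpower_mult, Rinv_l by lra. apply Rpower_1; exact He. }
  pose proof (Rpower_pos e (/ s)). pose proof (pw_nonneg d s).
  unfold Rmax. destruct (Rle_dec d (Rpower e (/ s))).
  - rewrite Hroot. repeat split; lra.
  - rewrite pw_pos by lra. repeat split; lra.
Qed.

Lemma ratio_ge u v a b : 0 <= a <= u -> 0 < v <= b -> a / b <= u / v.
Proof.
  intros [Ha Hu] [Hv Hb]. unfold Rdiv.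
  apply Rle_trans with (a * / v).
  - apply Rmult_le_compat_l; auto. apply Rinv_le_contravar; auto.
  - apply Rmult_le_compat_r; auto. left; apply Rinv_0_lt_compat; auto.
Qed.

Lemma ratio_le u v a b : 0 <= u <= a -> 0 < b <= v -> u / v <= a / b.
Proof. intros. apply ratio_ge; lra. Qed.

Lemma le_div_of_mul_le a b c : 0 < b -> c * b <= a -> c <= a / b.
Proof.
  intros Hb H. apply Rmult_le_reg_r with b; auto. unfold Rdiv.
  rewrite Rmult_assoc, Rinv_l, Rmult_1_r; lra.
Qed.

Lemma lt_div_of_mul_lt a b c : 0 < b -> c * b < a -> c < a / b.
Proof.
  intros Hb H. apply Rmult_lt_reg_r with b; auto. unfold Rdiv.
  rewrite Rmult_assoc, Rinv_l, Rmult_1_r; lra.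
Qed.

Lemma div_le_of_le_mul a b c : 0 < b -> a <= c * b -> a / b <= c.
Proof.
  intros Hb H. apply Rmult_le_reg_r with b; auto. unfold Rdiv.
  rewrite Rmult_assoc, Rinv_l, Rmult_1_r; lra.
Qed.

Lemma div_lt_of_lt_mul a b c : 0 < b -> a < c * b -> a / b < c.
Proof.
  intros Hb H. apply Rmult_lt_reg_r with b; auto. unfold Rdiv.
  rewrite Rmult_assoc, Rinv_l, Rmult_1_r; lra.
Qed.

Lemma div_gt_of_linear_bounds c eps L C M u v : 0 < eps -> 0 <= C -> 0 <= M ->
  0 < v <= L + C -> M <= u -> c * L <= M -> Rabs c * C < eps * L -> c - eps < u / v.
Proof.
  intros Heps HC HM Hv Hu HcL Hbig.
  apply Rlt_le_trans with (M / (L + C)); [|apply ratio_ge; lra].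
  destruct (Rle_dec c 0).
  - assert (0 <= M / (L + C)) by (apply le_div_of_mul_le; lra). lra.
  - apply lt_div_of_mul_lt; [lra|]. rewrite Rabs_right in Hbig by lra.
    assert (0 <= eps * C) by (apply Rmult_le_pos; lra). nra.
Qed.

Lemma div_lt_of_linear_bounds c eps L E D M u v : 0 < eps -> 0 <= E -> 0 <= D ->
  0 <= u <= M + D -> L - E <= v -> M <= c * L -> D + Rabs c * E + eps * E < eps * L -> u / v < c + eps.
Proof.
  intros Heps HE HD Hu Hv HcL Hbig.
  assert (0 <= Rabs c * E) by (apply Rmult_le_pos; [apply Rabs_pos| lra]).
  assert (c * E <= Rabs c * E) by (apply Rmult_le_compat_r; [lra| apply Rle_abs]).
  assert (HLE : 0 < L - E) by (apply Rmult_lt_reg_l with eps; lra).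
  apply Rle_lt_trans with ((M + D) / (L - E)); [apply ratio_le; lra|].
  apply div_lt_of_lt_mul; [lra| nra].
Qed.

Lemma lt_mul_of_div_lt a b c : 0 < b -> a / b < c -> a < c * b.
Proof.
  intros Hb H. apply Rmult_lt_compat_r with (r := b) in H; auto.
  unfold Rdiv in H. rewrite Rmult_assoc, Rinv_l, Rmult_1_r in H; lra.
Qed.

Lemma mul_lt_of_lt_div a b c : 0 < b -> c < a / b -> c * b < a.
Proof.
  intros Hb H. apply Rmult_lt_compat_r with (r := b) in H; auto.
  unfold Rdiv in H. rewrite Rmult_assoc, Rinv_l, Rmult_1_r in H; lra.
Qed.

Lemma mul_lt_of_div_mul_lt a k c d : 0 < k -> a / k * c < d -> a * c < k * d.
Proof.
  intros Hk H. apply Rmult_lt_compat_l with (r := k) in H; auto.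
  replace (k * (a / k * c)) with (a * c) in H by (field; lra). exact H.
Qed.

Lemma pow_small x y : 0 <= x < 1 -> 0 < y -> exists n0, forall n, (n0 <= n)%nat -> x ^ n < y.
Proof.
  intros Hx Hy. destruct (pow_lt_1_zero x ltac:(rewrite Rabs_right; lra) y Hy) as [n0 Hn].
  exists n0. intros n Hn'. specialize (Hn n Hn'). rewrite Rabs_right in Hn; auto.
  apply Rle_ge, pow_le; lra.
Qed.

Lemma pow_decr x n m : 0 <= x <= 1 -> (n <= m)%nat -> x ^ m <= x ^ n.
Proof.
  intros Hx H. induction H; [lra|]. simpl. pose proof (pow_le x m ltac:(lra)). nra.
Qed.

Lemma Rinv_lt_1 x : 1 < x -> / x < 1.
Proof. intros H. rewrite <- Rinv_1. apply Rinv_lt_contravar; lra. Qed.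

Lemma pow2_mul_pow_half k : 2 ^ k * (/ 2) ^ k = 1.
Proof. rewrite <- Rpow_mult_distr, Rinv_r, pow1; lra. Qed.

Lemma Rabs_le_of_pow4_le D y : 0 <= y -> D ^ 4 <= y ^ 4 -> Rabs D <= y.
Proof.
  intros Hy H. destruct (Rle_dec (Rabs D) y) as [|Hn]; auto. exfalso. apply Rnot_le_lt in Hn.
  set (a := Rabs D) in *. assert (Ha2 : a * a = D * D) by (unfold a; rewrite <- Rabs_mult; apply Rabs_right; nra).
  assert (0 <= a) by apply Rabs_pos. assert (y * y < a * a) by nra.
  assert (y * y * (y * y) < a * a * (a * a)) by (pose proof (Rmult_le_pos y y Hy Hy); nra).
  replace (D ^ 4) with ((D * D) * (D * D)) in H by ring. replace (y ^ 4) with (y * y * (y * y)) in H by ring.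
  rewrite <- Ha2 in H. lra.
Qed.

Lemma inv_pow32_le_telescope n : (2 <= n)%nat -> / (INR n * sqrt (INR n)) <= 2 * (/ sqrt (INR (n - 1)) - / sqrt (INR n)).
Proof.
  intros Hn. rewrite minus_INR by lia. simpl (INR 1).
  assert (Hn2 : 2 <= INR n) by (replace 2 with (INR 2) by (simpl; lra); apply le_INR; auto).
  set (a := sqrt (INR n - 1)). set (b := sqrt (INR n)).
  assert (Ha : 0 < a) by (apply sqrt_lt_R0; lra). assert (Hb : 0 < b) by (apply sqrt_lt_R0; lra).
  assert (Ha2 : a * a = INR n - 1) by (apply sqrt_sqrt; lra).
  assert (Hb2 : b * b = INR n) by (apply sqrt_sqrt; lra).
  assert (Hab : a <= b) by (apply sqrt_le_1_alt; lra).
  assert (E1 : (b - a) * (a + b) = 1) by nra.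
  assert (E2 : 2 * (/ a - / b) = 2 / (a * b * (a + b))).
  { assert (b - a = / (a + b)). { apply (Rmult_eq_reg_r (a + b)); [|lra]. rewrite E1, Rinv_l; lra. }
    replace (2 * (/ a - / b)) with (2 * (b - a) / (a * b)) by (field; lra). rewrite H. field. lra. }
  rewrite E2. rewrite <- Hb2.
  assert (Hk : a * b * (a + b) <= 2 * (b * b * b)) by nra.
  assert (Hp : 0 < a * b * (a + b)) by (apply Rmult_lt_0_compat; nra).
  assert (Q : / (2 * (b * b * b)) <= / (a * b * (a + b))) by (apply Rinv_le_contravar; auto).
  replace (/ (b * b * b)) with (2 * / (2 * (b * b * b))) by (field; nra).
  unfold Rdiv. lra.
Qed.

Lemma fsum_S f n : fsum f (S n) = fsum f n + f n.
Proof. reflexivity. Qed.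

Lemma fsum_le f g n : (forall i, (i < n)%nat -> f i <= g i) -> fsum f n <= fsum g n.
Proof. induction n; intros H; simpl; [lra|]. pose proof (H n ltac:(lia)). pose proof (IHn ltac:(intros; apply H; lia)). lra. Qed.

Lemma fsum_nonneg f n : (forall i, (i < n)%nat -> 0 <= f i) -> 0 <= fsum f n.
Proof. induction n; intros H; simpl; [lra|]. pose proof (H n ltac:(lia)). pose proof (IHn ltac:(intros; apply H; lia)). lra. Qed.

Lemma fsum_mono f n m : (forall i, 0 <= f i) -> (n <= m)%nat -> fsum f n <= fsum f m.
Proof. intros H Hnm. induction Hnm; [lra|]. simpl. pose proof (H m). lra. Qed.

Lemma fsum_plus f g n : fsum (fun i => f i + g i) n = fsum f n + fsum g n.
Proof. induction n; simpl; [ring| rewrite IHn; ring]. Qed.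

Lemma fsum_scal c f n : fsum (fun i => c * f i) n = c * fsum f n.
Proof. induction n; simpl; [ring| rewrite IHn; ring]. Qed.

Lemma fsum_const c n : fsum (fun _ => c) n = INR n * c.
Proof. induction n; simpl fsum; [simpl; ring| rewrite IHn, S_INR; ring]. Qed.

Lemma fsum_ext f g n : (forall i, (i < n)%nat -> f i = g i) -> fsum f n = fsum g n.
Proof. induction n; intros H; simpl; auto. rewrite IHn, H; auto. Qed.

Lemma fsum_trunc g K c m : (forall j, 0 <= g j <= c) -> (forall j, (K <= j)%nat -> g j = 0) -> fsum g m <= INR K * c.
Proof.
  intros H1 H2. assert (forall m, fsum g m <= INR (Nat.min m K) * c).
  { induction m0; simpl fsum. simpl; lra.
    destruct (le_lt_dec K m0).
    - rewrite H2 by auto. rewrite !Nat.min_r by lia. rewrite Nat.min_r in IHm0 by lia. lra.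
    - rewrite !Nat.min_l in * by lia. rewrite S_INR. pose proof (H1 m0). lra. }
  eapply Rle_trans; [apply H|]. destruct (H1 0%nat).
  apply Rmult_le_compat_r; [lra|]. apply le_INR; lia.
Qed.

Lemma fsum_zero f n : (forall i, (i < n)%nat -> f i = 0) -> fsum f n = 0.
Proof. intros H. rewrite (fsum_ext f (fun _ => 0)); auto. rewrite fsum_const; ring. Qed.

Lemma fsum_ind_le1 f n : (forall i, (i < n)%nat -> f i = 0 \/ f i = 1) ->
  (forall i j, (i < n)%nat -> (j < n)%nat -> i <> j -> f i = 1 -> f j = 1 -> False) -> fsum f n <= 1.
Proof.
  induction n; intros H1 H2; simpl; [lra|].
  destruct (H1 n ltac:(lia)) as [E|E].
  - rewrite E. assert (fsum f n <= 1); [|lra]. apply IHn.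
    + intros; apply H1; lia.
    + intros i j Hi Hj Hij Fi Fj. apply (H2 i j); auto; lia.
  - rewrite E, fsum_zero; [lra|]. intros i Hi. destruct (H1 i ltac:(lia)) as [E'|E']; auto.
    exfalso; apply (H2 i n); auto; lia.
Qed.

Lemma fsum_ge_term f K i : (forall j, (j < K)%nat -> 0 <= f j) -> (i < K)%nat -> f i <= fsum f K.
Proof.
  induction K; intros H Hi; [lia|]. simpl.
  destruct (Nat.eq_dec i K) as [->|Hne].
  - pose proof (fsum_nonneg f K ltac:(intros; apply H; lia)). lra.
  - pose proof (IHK ltac:(intros; apply H; lia) ltac:(lia)). pose proof (H K ltac:(lia)). lra.
Qed.

Lemma fsum_geom eps n : fsum (fun i => eps / 2 ^ (S i)) n = eps * (1 - / 2 ^ n).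
Proof.
  induction n. simpl; field.
  rewrite fsum_S, IHn. simpl pow. field; repeat split; try apply pow_nonzero; lra.
Qed.

Lemma fsum_geom2 K0 L : fsum (fun i => (/ 2) ^ (i + K0)) L <= 2 * (/ 2) ^ K0.
Proof.
  assert (forall L, fsum (fun i => (/ 2) ^ (i + K0)) L = 2 * (/ 2) ^ K0 * (1 - (/ 2) ^ L)).
  { induction L0. simpl; ring. rewrite fsum_S, IHL0, pow_add. simpl. field. }
  rewrite H. pose proof (pow_lt (/2) L ltac:(lra)). pose proof (pow_lt (/2) K0 ltac:(lra)). nra.
Qed.

Lemma fsum_split f a b : fsum f (a + b) = fsum f a + fsum (fun t => f (a + t)%nat) b.
Proof. induction b. rewrite Nat.add_0_r; simpl; ring. rewrite Nat.add_succ_r, !fsum_S, IHb. ring. Qed.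

Lemma fsum_shift f k : fsum f (S k) = f 0%nat + fsum (fun t => f (S t)) k.
Proof. induction k. simpl; ring. rewrite fsum_S, IHk, fsum_S. ring. Qed.

Fixpoint prefix (d : nat -> bool) (n : nat) : list bool :=
  match n with O => nil | S k => prefix d k ++ (d k :: nil) end.

Lemma prefix_length d n : length (prefix d n) = n.
Proof. induction n; simpl; auto. rewrite length_app, IHn; simpl; lia. Qed.

Lemma nested_prefix (sq : nat -> list bool) : (forall i, exists v, sq (S i) = sq i ++ v) ->
  forall i j, (i <= j)%nat -> exists v, sq j = sq i ++ v.
Proof.
  intros H i j Hij. induction Hij. exists nil; rewrite app_nil_r; auto.
  destruct IHHij as [v Hv]. destruct (H m) as [v' Hv']. exists (v ++ v').
  rewrite Hv', Hv, app_assoc; auto.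
Qed.

Lemma words_length n w : In w (words n) -> length w = n.
Proof.
  revert w; induction n; intros w H; simpl in H.
  - destruct H as [<-|[]]; reflexivity.
  - apply in_flat_map in H. destruct H as [u [Hu Hw]].
    simpl in Hw. destruct Hw as [<-|[<-|[]]]; simpl; f_equal; auto.
Qed.

Lemma words_In n w : length w = n -> In w (words n).
Proof.
  revert w; induction n; intros w H.
  - destruct w; [left; reflexivity| discriminate].
  - destruct w as [|b w]; [discriminate|]. simpl in H; injection H as H.
    simpl. apply in_flat_map. exists w; split; auto. destruct b; simpl; auto.
Qed.

Lemma length_words n : length (words n) = (2^n)%nat.
Proof.
  induction n; simpl; auto.
  assert (forall l : list (list bool), length (flat_map (fun w => (false :: w) :: (true :: w) :: nil) l) = (2 * length l)%nat).
  { induction l; simpl; auto. rewrite IHl. lia. }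
  rewrite H, IHn. lia.
Qed.

Lemma words_NoDup n : NoDup (words n).
Proof.
  induction n; simpl. constructor; [simpl; tauto| constructor].
  revert IHn. generalize (words n). intros l Hl.
  induction Hl as [|w l Hw Hl IH]; simpl. constructor.
  constructor.
  - intros [H|H]; try discriminate.
    apply in_flat_map in H. destruct H as [u [Hu H]]. simpl in H.
    destruct H as [H|[H|[]]]; injection H; intros; subst; tauto.
  - constructor; auto.
    intros H. apply in_flat_map in H. destruct H as [u [Hu H]]. simpl in H.
    destruct H as [H|[H|[]]]; injection H; intros; subst; tauto.
Qed.

Lemma fsum_nth (G : list bool -> R) l : fsum (fun t => G (nth t l nil)) (length l) = fold_right Rplus 0 (map G l).
Proof.
  induction l; [reflexivity|]. cbn [length map fold_right]. rewrite fsum_shift, <- IHl. reflexivity.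
Qed.

Lemma log2_block m t : (t < 2 ^ m)%nat -> Nat.log2 (2 ^ m + t) = m.
Proof. intros H. apply (Nat.log2_unique' _ _ t); lia. Qed.

Definition sum_words (n : nat) (g : list bool -> R) : R := fold_right Rplus 0 (map g (words n)).

Lemma sum_words_S n g : sum_words (S n) g = sum_words n (fun w => g (false :: w) + g (true :: w)).
Proof. unfold sum_words; simpl. induction (words n) as [|w l IH]; simpl; [ring| rewrite IH; ring]. Qed.

Lemma sum_words_0 g : sum_words 0 g = g nil.
Proof. unfold sum_words; simpl; ring. Qed.

Lemma sum_words_ext n g h : (forall w, length w = n -> g w = h w) -> sum_words n g = sum_words n h.
Proof.
  revert g h; induction n; intros g h H.
  - rewrite !sum_words_0; apply H; reflexivity.
  - rewrite !sum_words_S; apply IHn. intros w Hw. rewrite !H; simpl; auto.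
Qed.

Lemma sum_words_le n g h : (forall w, length w = n -> g w <= h w) -> sum_words n g <= sum_words n h.
Proof.
  revert g h; induction n; intros g h H.
  - rewrite !sum_words_0; apply H; reflexivity.
  - rewrite !sum_words_S; apply IHn. intros w Hw. pose proof (H (false::w)). pose proof (H (true::w)).
    simpl in *. rewrite Hw in *. specialize (H0 eq_refl). specialize (H1 eq_refl). lra.
Qed.

Lemma sum_words_plus n g h : sum_words n (fun w => g w + h w) = sum_words n g + sum_words n h.
Proof. unfold sum_words; induction (words n); simpl; [ring| rewrite IHl; ring]. Qed.

Lemma sum_words_scal n c g : sum_words n (fun w => c * g w) = c * sum_words n g.
Proof. unfold sum_words; induction (words n); simpl; [ring| rewrite IHl; ring]. Qed.

Lemma sum_words_const n c : sum_words n (fun _ => c) = c * 2^n.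
Proof.
  revert c; induction n; intros c. rewrite sum_words_0; simpl; ring.
  rewrite sum_words_S. rewrite (sum_words_ext n _ (fun _ => 2 * c)) by (intros; ring).
  rewrite IHn; simpl; ring.
Qed.

Lemma sum_words_ge0 n g : (forall w, length w = n -> 0 <= g w) -> 0 <= sum_words n g.
Proof.
  intros H. rewrite <- (Rmult_0_l (2^n)), <- (sum_words_const n 0). apply sum_words_le; auto.
Qed.

Lemma sum_words_ge_term n g w0 : (forall w, length w = n -> 0 <= g w) -> length w0 = n -> g w0 <= sum_words n g.
Proof.
  revert g w0; induction n; intros g w0 H Hl.
  - destruct w0; [|discriminate]. rewrite sum_words_0; lra.
  - destruct w0 as [|b w0]; [discriminate|]. simpl in Hl. injection Hl as Hl.
    rewrite sum_words_S.
    assert (g (b::w0) <= g (false::w0) + g (true::w0)).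
    { pose proof (H (false::w0)); pose proof (H (true::w0)); simpl in *.
      rewrite Hl in *. specialize (H0 eq_refl); specialize (H1 eq_refl). destruct b; lra. }
    eapply Rle_trans; [exact H0|].
    apply (IHn (fun w => g (false :: w) + g (true :: w))); auto.
    intros w Hw. pose proof (H (false::w)); pose proof (H (true::w)); simpl in *.
    rewrite Hw in *. specialize (H1 eq_refl); specialize (H2 eq_refl). lra.
Qed.

Lemma sum_words_single n g w0 : (forall w, length w = n -> w <> w0 -> g w = 0) -> length w0 = n -> sum_words n g = g w0.
Proof.
  revert g w0; induction n; intros g w0 H Hl.
  - destruct w0; [|discriminate]. rewrite sum_words_0; auto.
  - destruct w0 as [|b w0]; [discriminate|]. simpl in Hl. injection Hl as Hl.
    rewrite sum_words_S.
    rewrite (IHn (fun w => g (false :: w) + g (true :: w)) w0); auto.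
    + destruct b; [rewrite (H (false::w0)) | rewrite (H (true::w0))]; simpl; auto; try lra; congruence.
    + intros w Hw Hne. rewrite !H; simpl; auto; try lra; congruence.
Qed.

Lemma sum_words_app n j g : sum_words (n + j) g = sum_words n (fun w => sum_words j (fun v => g (w ++ v))).
Proof.
  revert g; induction n; intros g.
  - simpl. rewrite sum_words_0. reflexivity.
  - simpl plus. rewrite !sum_words_S. rewrite IHn. apply sum_words_ext. intros w _.
    rewrite <- sum_words_plus. reflexivity.
Qed.

Lemma sum_words_fsum m g K : sum_words m (fun w => fsum (fun i => g i w) K) = fsum (fun i => sum_words m (g i)) K.
Proof.
  induction K.
  - simpl. rewrite sum_words_const. ring.
  - simpl. rewrite sum_words_plus, IHK. reflexivity.
Qed.

Lemma sum_words_at_most_one k g c : (forall w w', length w = k -> length w' = k -> g w <> 0 -> g w' <> 0 -> w = w') ->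
  (forall w, length w = k -> 0 <= g w <= c) -> sum_words k g <= c.
Proof.
  intros H1 H2. destruct (classic (exists w0, length w0 = k /\ g w0 <> 0)) as [[w0 [Hl Hg]]|Hn].
  - rewrite (sum_words_single _ _ w0); auto. apply H2; auto.
    intros w Hw Hne. destruct (Req_dec (g w) 0); auto. exfalso; apply Hne; apply H1; auto.
  - rewrite (sum_words_ext _ _ (fun _ => 0)).
    + rewrite sum_words_const. assert (Hk : length (repeat false k) = k) by apply repeat_length.
      destruct (H2 _ Hk). lra.
    + intros w Hw. destruct (Req_dec (g w) 0); auto. exfalso; apply Hn; eauto.
Qed.

Lemma sum_words_neq0 k g : (forall w, length w = k -> 0 <= g w) -> sum_words k g <> 0 -> exists w, length w = k /\ g w <> 0.
Proof.
  intros Hg H. destruct (classic (exists w, length w = k /\ g w <> 0)) as [E|Hn]; auto. exfalso; apply H.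
  rewrite (sum_words_ext _ _ (fun _ => 0)). rewrite sum_words_const; ring.
  intros w Hw. destruct (Req_dec (g w) 0); auto. exfalso; apply Hn; eauto.
Qed.

(** * Geometry of the intervals I_w *)

Section CantorSet.
Variables (A B : R) (N : nat -> nat).
Hypothesis hB : 2 < B.
Hypothesis hAB : B < A.
Hypothesis hNinc : forall i, (N i < N (S i))%nat.
Hypothesis hNratio : forall M : R, exists i0, forall i, (i0 <= i)%nat -> M < INR (N (S i)) / INR (N i).

Notation ell := (lenI A B N).
Notation r := (rr A B N).
Notation leA := (leftI_aux A B N).

Lemma rr_cases k : r k = A \/ r k = B.
Proof. unfold rr; destruct (excluded_middle_informative _); auto. Qed.

Lemma rr_ge k : B <= r k.
Proof. destruct (rr_cases k) as [->| ->]; lra. Qed.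

Lemma rr_le k : r k <= A.
Proof. destruct (rr_cases k) as [->| ->]; lra. Qed.

Lemma ell_S n : ell (S n) = ell n / r (S n).
Proof. reflexivity. Qed.

Lemma ell_pos n : 0 < ell n.
Proof.
  induction n; simpl; [lra|]. apply Rdiv_lt_0_compat; auto.
  pose proof (rr_ge (S n)); lra.
Qed.

Lemma ell_eq n : ell n = r (S n) * ell (S n).
Proof. rewrite ell_S. field. pose proof (rr_ge (S n)); lra. Qed.

Lemma ell_S_le n : ell (S n) <= ell n / B.
Proof.
  rewrite ell_S. unfold Rdiv. apply Rmult_le_compat_l. left; apply ell_pos.
  apply Rinv_le_contravar; [lra| apply rr_ge].
Qed.

Lemma ell_S_ge n : ell n / A <= ell (S n).
Proof.
  rewrite ell_S. unfold Rdiv. apply Rmult_le_compat_l. left; apply ell_pos.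
  apply Rinv_le_contravar; [pose proof (rr_ge (S n)); lra| apply rr_le].
Qed.

Lemma ell_S_lt n : ell (S n) < ell n.
Proof.
  pose proof (ell_S_le n). pose proof (ell_pos n).
  assert (ell n / B < ell n). { apply Rmult_lt_reg_r with B; [lra|].
    unfold Rdiv; rewrite Rmult_assoc, Rinv_l; nra. } lra.
Qed.

Lemma ell_mono n m : (n <= m)%nat -> ell m <= ell n.
Proof.
  induction 1; [lra|]. pose proof (ell_S_lt m); lra.
Qed.

Lemma ell_add n k : ell (n + k) <= ell n * (/B)^k.
Proof.
  induction k.
  - rewrite Nat.add_0_r; simpl; lra.
  - rewrite Nat.add_succ_r. pose proof (ell_S_le (n+k)).
    assert (ell (n+k) / B <= ell n * (/B)^k / B).
    { unfold Rdiv. apply Rmult_le_compat_r; [left; apply Rinv_0_lt_compat; lra| auto]. }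
    assert (E: (/B)^(S k) = (/B)^k * /B) by (simpl; ring). rewrite E, <- Rmult_assoc.
    unfold Rdiv in *. lra.
Qed.

Lemma ell_le_pow n : ell n <= (/B)^n.
Proof. pose proof (ell_add 0 n). rewrite Nat.add_0_l in H. change (ell 0) with 1 in H. lra. Qed.

Lemma ell_ge_pow n : (/A)^n <= ell n.
Proof.
  induction n; [simpl; lra|].
  change ((/A)^(S n)) with (/A * (/A)^n).
  pose proof (ell_S_ge n).
  assert (/A * (/A)^n <= ell n / A).
  { unfold Rdiv. rewrite Rmult_comm. apply Rmult_le_compat_r; [left; apply Rinv_0_lt_compat; lra|auto]. }
  lra.
Qed.

Lemma ell_le1 n : ell n <= 1.
Proof. pose proof (ell_mono 0 n ltac:(lia)). simpl in H. lra. Qed.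

Lemma ell_small y : 0 < y -> exists n0, forall n, (n0 <= n)%nat -> ell n < y.
Proof.
  intros Hy. destruct (pow_small (/B) y) as [n0 Hn0]; auto.
  { split. left; apply Rinv_0_lt_compat; lra. apply Rinv_lt_1; lra. }
  exists n0. intros n Hn. pose proof (ell_le_pow n). specialize (Hn0 n Hn). lra.
Qed.

Lemma ell_level_exists rad : 0 < rad < 1 -> exists n, ell (S n) <= rad < ell n.
Proof.
  intros Hr. destruct (ell_small rad) as [m Hm]; [lra|]. specialize (Hm m (le_n m)).
  apply Rlt_le in Hm. revert Hm. induction m; intros Hm. simpl in Hm; lra.
  destruct (Rlt_dec rad (ell m)) as [H|H]. exists m. split; [exact Hm| exact H]. apply IHm; lra.
Qed.

Lemma ball_level_exists rad : 0 < rad < B - 2 -> exists n, (B-2) * ell (S n) <= rad < (B-2) * ell n.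
Proof.
  intros Hr. destruct (ell_small (rad / (B-2))) as [m Hm].
  { apply Rdiv_lt_0_compat; lra. }
  specialize (Hm m (le_n m)).
  assert (Hm' : (B-2) * ell m <= rad).
  { apply Rmult_lt_compat_l with (r := B-2) in Hm; [|lra].
    unfold Rdiv in Hm. rewrite <- Rmult_assoc, (Rmult_comm (B-2) rad), Rmult_assoc, Rinv_r in Hm; lra. }
  clear Hm. induction m.
  - simpl in Hm'. lra.
  - destruct (Rlt_dec rad ((B-2) * ell m)) as [H|H].
    + exists m; split; auto.
    + apply IHm. lra.
Qed.

Lemma ball_level_large rad n n1 : (B-2) * ell (S n) <= rad -> rad < (B-2) * (/A)^(S n1) -> (n1 <= n)%nat.
Proof.
  intros H1 H2. destruct (le_lt_dec n1 n) as [|Hlt]; auto. exfalso.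
  pose proof (ell_ge_pow (S n)).
  assert ((/A)^(S n1) <= (/A)^(S n)).
  { apply pow_decr; [|lia]. split. left; apply Rinv_0_lt_compat; lra.
    left; apply Rinv_lt_1; lra. }
  nra.
Qed.

Lemma leftI_app w v k : leA (w ++ v) k = leA w k + leA v (k + length w).
Proof.
  revert k; induction w; intros k; simpl.
  - rewrite Nat.add_0_r; ring.
  - rewrite IHw. replace (S k + length w)%nat with (k + S (length w))%nat by lia. ring.
Qed.

Lemma leftI_aux_bounds v k : 0 <= leA v k /\ leA v k + ell (k + length v) <= ell k.
Proof.
  revert k; induction v; intros k; cbn [leftI_aux length].
  - rewrite Nat.add_0_r; lra.
  - destruct (IHv (S k)) as [H1 H2].
    replace (k + S (length v))%nat with (S k + length v)%nat by lia.
    pose proof (ell_S_lt k). destruct a; lra.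
Qed.

Lemma leftI_le1 w : leftI A B N w <= 1.
Proof. unfold leftI. destruct (leftI_aux_bounds w 0). pose proof (ell_pos (0 + length w)). simpl in *. lra. Qed.

Lemma inI_app w v x : inI A B N (w ++ v) x -> inI A B N w x.
Proof.
  unfold inI, leftI. rewrite leftI_app, length_app. simpl.
  destruct (leftI_aux_bounds v (length w)). lra.
Qed.

Lemma inI_sub w v : leftI A B N w <= leftI A B N (w ++ v) /\
   leftI A B N (w ++ v) + ell (length (w ++ v)) <= leftI A B N w + ell (length w).
Proof.
  unfold leftI. rewrite leftI_app, length_app. simpl.
  destruct (leftI_aux_bounds v (length w)). lra.
Qed.

(* Distinct intervals of the same level are at distance at least (B-2) times
   their length. *)
Lemma leftI_aux_separated u : forall m w k, length u = m -> length w = m -> u <> w ->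
  leA u k + (B-1) * ell (k+m) <= leA w k \/ leA w k + (B-1) * ell (k+m) <= leA u k.
Proof.
  induction u as [|a u IH]; intros m w k Hu Hw Hne.
  - subst m. destruct w; [congruence| discriminate].
  - destruct w as [|b w]; [simpl in *; subst; discriminate|].
    simpl in Hu, Hw. subst m. injection Hw as Hw.
    replace (k + S (length u))%nat with (S k + length u)%nat by lia.
    cbn [leftI_aux].
    destruct (leftI_aux_bounds u (S k)) as [U1 U2]. destruct (leftI_aux_bounds w (S k)) as [W1 W2].
    rewrite Hw in W2.
    pose proof (ell_mono (S k) (S k + length u) ltac:(lia)).
    pose proof (ell_eq k). pose proof (rr_ge (S k)). pose proof (ell_pos (S k)).
    pose proof (ell_pos (S k + length u)).
    assert (Hg : (B-2) * ell (S k + length u) <= ell k - 2 * ell (S k)) by nra.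
    destruct (Bool.bool_dec a b) as [<-|Hab].
    + assert (u <> w) by congruence.
      destruct (IH (length u) w (S k) eq_refl Hw H4); destruct a; lra.
    + destruct a, b; try congruence; lra.
Qed.

Lemma inI_unique u w x : length u = length w -> inI A B N u x -> inI A B N w x -> u = w.
Proof.
  intros Hl Hu Hw. destruct (list_eq_dec Bool.bool_dec u w) as [|Hne]; auto.
  exfalso. unfold inI, leftI in *. rewrite Hl in Hu.
  destruct (leftI_aux_separated u (length w) w 0 Hl eq_refl Hne) as [G|G]; simpl in G;
  pose proof (ell_pos (length w)); nra.
Qed.

Lemma short_interval_one_word u v k w1 w2 y1 y2 : v - u < (B-2) * ell k -> length w1 = k -> length w2 = k ->
  inI A B N w1 y1 -> inI A B N w2 y2 -> u < y1 < v -> u < y2 < v -> w1 = w2.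
Proof.
  intros HL H1 H2 Hy1 Hy2 Hu1 Hu2. destruct (list_eq_dec Bool.bool_dec w1 w2) as [|Hne]; auto. exfalso.
  unfold inI, leftI in *. rewrite H1 in Hy1; rewrite H2 in Hy2.
  pose proof (ell_pos k).
  destruct (leftI_aux_separated w1 k w2 0 H1 H2 Hne) as [G|G]; simpl in G; nra.
Qed.

Lemma inX_address x : inX A B N x -> exists d, forall n, inI A B N (prefix d n) x.
Proof.
  intros HX.
  assert (H : forall n, exists w, length w = n /\ inI A B N w x).
  { intros [|n]; [|apply HX; lia].
    destruct (HX 1%nat ltac:(lia)) as [w [Hl Hw]]. exists nil; split; auto.
    apply (inI_app nil w x); auto. }
  set (W := fun n => proj1_sig (constructive_indefinite_description _ (H n))).
  assert (HW : forall n, length (W n) = n /\ inI A B N (W n) x).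
  { intros n. exact (proj2_sig (constructive_indefinite_description _ (H n))). }
  exists (fun k => nth k (W (S k)) false).
  assert (E : forall n, prefix (fun k => nth k (W (S k)) false) n = W n).
  { induction n.
    - destruct (HW 0%nat) as [H0 _]. destruct (W 0%nat); [reflexivity| discriminate].
    - destruct (HW (S n)) as [H1 H2].
      destruct (exists_last (l := W (S n))) as [u [b Hub]].
      { intro Hc; rewrite Hc in H1; discriminate. }
      rewrite Hub in H1, H2 |- *. rewrite length_app in H1. simpl in H1.
      assert (Hu : u = W n).
      { apply (inI_unique u (W n) x).
        - destruct (HW n); lia.
        - apply (inI_app u (b::nil) x); auto.
        - apply HW. }
      simpl. rewrite Hub, IHn, <- Hu. f_equal. f_equal.
      rewrite app_nth2 by lia. replace (n - length u)%nat with 0%nat by lia. reflexivity. }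
  intros n. rewrite E. apply HW.
Qed.

Lemma nested_point (sq : nat -> list bool) : (forall i, exists v, sq (S i) = sq i ++ v) ->
  exists x, forall i, inI A B N (sq i) x.
Proof.
  intros H. destruct (completeness (fun y => exists i, y = leftI A B N (sq i))) as [x [Hx1 Hx2]].
  - exists 1. intros y [i ->]. apply leftI_le1.
  - exists (leftI A B N (sq 0%nat)); eauto.
  - exists x. intros i. split.
    + apply Hx1; eauto.
    + apply Hx2. intros y [j ->]. destruct (le_lt_dec j i) as [Hji|Hij].
      * destruct (nested_prefix sq H j i Hji) as [v Hv]. rewrite Hv.
        destruct (inI_sub (sq j) v). pose proof (ell_pos (length (sq j ++ v))). lra.
      * destruct (nested_prefix sq H i j ltac:(lia)) as [v Hv]. rewrite Hv.
        destruct (inI_sub (sq i) v). pose proof (ell_pos (length (sq i ++ v))). lra.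
Qed.

Lemma inX_of_nested (sq : nat -> list bool) x : (forall i, (i <= length (sq i))%nat) ->
  (forall i, inI A B N (sq i) x) -> inX A B N x.
Proof.
  intros Hl Hx n _. exists (firstn n (sq n)). split.
  - rewrite length_firstn. specialize (Hl n). lia.
  - apply (inI_app _ (skipn n (sq n))). rewrite firstn_skipn. auto.
Qed.

Lemma lnB_pos : 0 < ln B.
Proof. apply ln_gt_0; lra. Qed.

Lemma lnA_pos : 0 < ln A.
Proof. apply ln_gt_0; lra. Qed.

Lemma ln_rr_bounds k : ln B <= ln (r k) <= ln A.
Proof. pose proof (rr_ge k); pose proof (rr_le k). split; apply ln_le; lra. Qed.

Definition loglen n := - ln (ell n).

Lemma loglen_S n : loglen (S n) = loglen n + ln (r (S n)).
Proof.
  unfold loglen. rewrite ell_S. unfold Rdiv. rewrite ln_mult, ln_Rinv. ring.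
  all: pose proof (rr_ge (S n)); try apply Rinv_0_lt_compat; try apply ell_pos; lra.
Qed.

Lemma loglen_0 : loglen 0 = 0.
Proof. unfold loglen; simpl. rewrite ln_1; ring. Qed.

Lemma loglen_ge n : INR n * ln B <= loglen n.
Proof.
  induction n. rewrite loglen_0; simpl; lra.
  rewrite loglen_S, S_INR. pose proof (ln_rr_bounds (S n)). lra.
Qed.

Lemma loglen_S_le n : loglen (S n) <= loglen n + ln A.
Proof. rewrite loglen_S. pose proof (ln_rr_bounds (S n)). lra. Qed.

Lemma loglen_nonneg n : 0 <= loglen n.
Proof. pose proof (loglen_ge n). pose proof (pos_INR n). pose proof lnB_pos. nra. Qed.

Lemma loglen_dominates eps K : 0 < eps -> exists n0, forall n, (n0 <= n)%nat -> K < eps * loglen n.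
Proof.
  intros Heps. pose proof lnB_pos.
  destruct (INR_unbounded (K / (eps * ln B))) as [n0 Hn0]. exists n0. intros n Hn.
  assert (K < INR n0 * (eps * ln B)) by (apply lt_mul_of_div_lt; [nra| exact Hn0]).
  assert (INR n0 * (eps * ln B) <= INR n * (eps * ln B)) by (apply Rmult_le_compat_r; [nra| apply le_INR; exact Hn]).
  assert (eps * (INR n * ln B) <= eps * loglen n) by (apply Rmult_le_compat_l; [lra| apply loglen_ge]).
  lra.
Qed.

Lemma ball_level_eventually n0 : exists delta, 0 < delta /\ forall rad, 0 < rad < delta ->
  rad < 1 /\ exists n, (n0 <= n)%nat /\ (B-2) * ell (S n) <= rad < (B-2) * ell n.
Proof.
  assert (0 < (/A)^(S n0)) by (apply pow_lt, Rinv_0_lt_compat; lra).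
  pose proof (Rmin_l 1 (Rmin (B-2) ((B-2) * (/A)^(S n0)))).
  pose proof (Rmin_r 1 (Rmin (B-2) ((B-2) * (/A)^(S n0)))).
  pose proof (Rmin_l (B-2) ((B-2) * (/A)^(S n0))). pose proof (Rmin_r (B-2) ((B-2) * (/A)^(S n0))).
  exists (Rmin 1 (Rmin (B-2) ((B-2) * (/A)^(S n0)))).
  split; [apply Rmin_pos; [lra| apply Rmin_pos; nra]|].
  intros rad Hr. split; [lra|].
  destruct (ball_level_exists rad) as [n [Hn1 Hn2]]; [lra|].
  exists n. split; [apply (ball_level_large rad); lra| auto].
Qed.

Lemma neg_ln_le_loglen rad n : (B-2) * ell (S n) <= rad -> - ln rad <= loglen n + (ln A + Rabs (ln (B-2))).
Proof.
  intros H. pose proof (ell_pos (S n)).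
  assert (Q0 : 0 < (B-2) * ell (S n)) by nra.
  pose proof (ln_le _ _ Q0 H) as Q1. rewrite ln_mult in Q1 by lra.
  pose proof (loglen_S_le n) as Q2. unfold loglen in Q2. pose proof (Rle_abs (- ln (B-2))) as Q3.
  rewrite Rabs_Ropp in Q3. unfold loglen. lra.
Qed.

Lemma loglen_le_neg_ln rad n : 0 < rad -> rad < (B-2) * ell n -> loglen n - Rabs (ln (B-2)) <= - ln rad.
Proof.
  intros Hr H. pose proof (ell_pos n).
  pose proof (ln_le _ _ Hr (Rlt_le _ _ H)) as Q. rewrite ln_mult in Q by lra.
  unfold loglen. pose proof (Rle_abs (ln (B-2))). lra.
Qed.

(** * Alternating blocks of digits *)

Lemma N_mono i j : (i <= j)%nat -> (N i <= N j)%nat.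
Proof. induction 1; auto. pose proof (hNinc m); lia. Qed.

Lemma N_ge i : (i <= N i)%nat.
Proof. induction i; [lia|]. pose proof (hNinc i); lia. Qed.

Lemma typeA_blockA k i : (N (2*i) < k <= N (2*i+1))%nat -> typeA N k.
Proof. intros H. exists i; exact H. Qed.

Lemma not_typeA_blockB k i : (N (2*i+1) < k <= N (2*i+2))%nat -> ~ typeA N k.
Proof.
  intros H [j Hj]. destruct (le_lt_dec j i).
  - pose proof (N_mono (2*j+1) (2*i+1) ltac:(lia)). lia.
  - pose proof (N_mono (2*i+2) (2*j) ltac:(lia)). lia.
Qed.

Lemma rr_blockA k i : (N (2*i) < k <= N (2*i+1))%nat -> r k = A.
Proof.
  intros H. unfold rr. destruct (excluded_middle_informative _) as [_|Hn]; [reflexivity|].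
  destruct (Hn (typeA_blockA k i H)).
Qed.

Lemma rr_blockB k i : (N (2*i+1) < k <= N (2*i+2))%nat -> r k = B.
Proof.
  intros H. unfold rr. destruct (excluded_middle_informative _) as [Ht|_]; [|reflexivity].
  destruct (not_typeA_blockB k i H Ht).
Qed.

Lemma N_ratio_large M : exists i0, forall i, (i0 <= i)%nat -> M * INR (N i) < INR (N (S i)).
Proof.
  destruct (hNratio M) as [i0 H]. exists (S i0). intros i Hi.
  specialize (H i ltac:(lia)).
  assert (0 < INR (N i)). { apply lt_0_INR. pose proof (N_ge i). lia. }
  apply Rmult_lt_compat_r with (r := INR (N i)) in H; auto.
  unfold Rdiv in H. rewrite Rmult_assoc, Rinv_l in H by lra. lra.
Qed.

Section Increments.
Variable Y : nat -> R.
Variable y : nat -> R.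
Hypothesis HY0 : Y 0%nat = 0.
Hypothesis HYS : forall n, Y (S n) = Y n + y n.

Lemma sum_lower_of_steps c : (forall k, c * ln (r (S k)) <= y k) -> forall n, c * loglen n <= Y n.
Proof.
  intros H n. induction n. rewrite HY0, loglen_0; lra.
  rewrite HYS, loglen_S. specialize (H n). lra.
Qed.

Lemma sum_upper_of_steps c : (forall k, y k <= c * ln (r (S k))) -> forall n, Y n <= c * loglen n.
Proof.
  intros H n. induction n. rewrite HY0, loglen_0; lra.
  rewrite HYS, loglen_S. specialize (H n). lra.
Qed.

(* At n = N_(2i+1) (resp. N_(2i+2)) the digits before the current block are a
   vanishing fraction of the n digits, since N_(i+1) / N_i -> oo. *)
Lemma sum_frequently_le c G : 0 <= c -> (forall k, 0 <= y k <= G) ->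
  (forall k i, (N (2*i) < S k <= N (2*i+1))%nat -> y k <= c * ln A) ->
  forall eps, 0 < eps -> forall n1, exists n, (n1 <= n)%nat /\ Y n <= (c + eps) * loglen n.
Proof.
  intros Hc Hy HA eps Heps n1.
  assert (Hcl : forall i n, (n <= N (2*i+1))%nat -> Y n <= c * loglen n + G * INR (Nat.min n (N (2*i)))).
  { intros i n. induction n; intros Hn.
    - rewrite HY0, loglen_0. simpl. lra.
    - rewrite HYS, loglen_S. specialize (IHn ltac:(lia)).
      destruct (le_lt_dec (S n) (N (2*i))) as [Hle|Hlt].
      + rewrite Nat.min_l in * by lia. rewrite S_INR. pose proof (ln_rr_bounds (S n)).
        pose proof lnB_pos. destruct (Hy n). nra.
      + rewrite (Nat.min_r (S n)) by lia. rewrite (Nat.min_r n) in IHn by lia.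
        rewrite (rr_blockA (S n) i) by lia.
        specialize (HA n i ltac:(lia)). lra. }
  pose proof lnB_pos.
  destruct (N_ratio_large (G / (eps * ln B))) as [i0 Hi0].
  set (i := (i0 + n1 + 1)%nat).
  exists (N (2*i+1))%nat. split.
  { pose proof (N_ge (2*i+1)). unfold i in *. lia. }
  specialize (Hcl i (N (2*i+1)) (le_n _)). rewrite Nat.min_r in Hcl by (pose proof (hNinc (2*i)); replace (S (2*i)) with (2*i+1)%nat in * by lia; lia).
  specialize (Hi0 (2*i)%nat ltac:(unfold i; lia)). replace (S (2*i)) with (2*i+1)%nat in Hi0 by lia.
  pose proof (loglen_ge (N (2*i+1))).
  assert (G * INR (N (2*i)) <= eps * loglen (N (2*i+1))); [|lra].
  assert (Hg : G * INR (N (2*i)) < eps * ln B * INR (N (2*i+1))) by (apply mul_lt_of_div_mul_lt; nra).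
  assert (eps * (INR (N (2 * i + 1)) * ln B) <= eps * loglen (N (2*i+1))) by (apply Rmult_le_compat_l; lra).
  lra.
Qed.

Lemma sum_frequently_ge c : 0 <= c -> (forall k, 0 <= y k) ->
  (forall k i, (N (2*i+1) < S k <= N (2*i+2))%nat -> c * ln B <= y k) ->
  forall eps, 0 < eps -> forall n1, exists n, (n1 <= n)%nat /\ (c - eps) * loglen n <= Y n.
Proof.
  intros Hc Hy HB eps Heps n1.
  assert (Hcl : forall i n, (n <= N (2*i+2))%nat -> c * loglen n - c * ln A * INR (Nat.min n (N (2*i+1))) <= Y n).
  { intros i n. induction n; intros Hn.
    - rewrite HY0, loglen_0. simpl. lra.
    - rewrite HYS, loglen_S. specialize (IHn ltac:(lia)).
      destruct (le_lt_dec (S n) (N (2*i+1))) as [Hle|Hlt].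
      + rewrite Nat.min_l in * by lia. rewrite S_INR. pose proof (ln_rr_bounds (S n)).
        pose proof (Hy n). assert (c * ln (r (S n)) <= c * ln A) by (apply Rmult_le_compat_l; lra). nra.
      + rewrite (Nat.min_r (S n)) by lia. rewrite (Nat.min_r n) in IHn by lia.
        rewrite (rr_blockB (S n) i) by lia.
        specialize (HB n i ltac:(lia)). lra. }
  pose proof lnB_pos. pose proof lnA_pos.
  destruct (N_ratio_large (c * ln A / (eps * ln B))) as [i0 Hi0].
  set (i := (i0 + n1 + 1)%nat).
  exists (N (2*i+2))%nat. split.
  { pose proof (N_ge (2*i+2)). unfold i in *. lia. }
  specialize (Hcl i (N (2*i+2)) (le_n _)). rewrite Nat.min_r in Hcl by (pose proof (hNinc (2*i+1)); replace (S (2*i+1)) with (2*i+2)%nat in * by lia; lia).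
  specialize (Hi0 (2*i+1)%nat ltac:(unfold i; lia)). replace (S (2*i+1)) with (2*i+2)%nat in Hi0 by lia.
  pose proof (loglen_ge (N (2*i+2))).
  assert (c * ln A * INR (N (2*i+1)) <= eps * loglen (N (2*i+2))); [|lra].
  assert (Hg : c * ln A * INR (N (2*i+1)) < eps * ln B * INR (N (2*i+2))) by (apply mul_lt_of_div_mul_lt; nra).
  assert (eps * (INR (N (2 * i + 2)) * ln B) <= eps * loglen (N (2*i+2))) by (apply Rmult_le_compat_l; lra).
  lra.
Qed.
End Increments.

Lemma loglen_blockA_lower i n : (n <= N (2*i+1))%nat -> ln A * (INR n - INR (N (2*i))) <= loglen n.
Proof.
  pose proof lnA_pos. induction n; intros Hn.
  - rewrite loglen_0. change (INR 0) with 0. pose proof (pos_INR (N (2*i))). nra.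
  - destruct (le_lt_dec (S n) (N (2*i))) as [Hle|Hlt].
    + pose proof (loglen_nonneg (S n)). apply le_INR in Hle. nra.
    + rewrite loglen_S. rewrite (rr_blockA (S n) i), S_INR by lia.
      specialize (IHn ltac:(lia)). lra.
Qed.

Lemma loglen_blockB_upper j n : (n <= N (2*j+2))%nat -> loglen n <= ln B * INR n + ln A * INR (Nat.min n (N (2*j+1))).
Proof.
  pose proof lnA_pos. pose proof lnB_pos. induction n; intros Hn.
  - rewrite loglen_0. change (INR 0) with 0. simpl Nat.min. change (INR 0) with 0. lra.
  - rewrite loglen_S. specialize (IHn ltac:(lia)).
    destruct (le_lt_dec (S n) (N (2*j+1))) as [Hle|Hlt].
    + rewrite !Nat.min_l in * by lia. rewrite !S_INR. pose proof (ln_rr_bounds (S n)). lra.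
    + rewrite (Nat.min_r (S n)) by lia. rewrite (Nat.min_r n) in IHn by lia.
      rewrite (rr_blockB (S n) j), S_INR by lia. lra.
Qed.

(** * Hausdorff dimension *)

Lemma pow2_mul_Rpower_ell n s : 2 ^ n * Rpower (ell n) s = exp (INR n * ln 2 - s * loglen n).
Proof.
  rewrite pow2_exp. unfold Rpower, loglen. rewrite <- exp_plus. f_equal. ring.
Qed.

Lemma pow2_Rpower_ell_small s eps n0 : ln 2 / ln A < s -> 0 < eps ->
  exists n, (n0 <= n)%nat /\ 2 ^ n * Rpower (ell n) s <= eps.
Proof.
  intros Hs Heps. pose proof lnA_pos.
  set (kap := s * ln A - ln 2).
  assert (Hkap : 0 < kap) by (pose proof (lt_mul_of_div_lt _ _ _ H Hs); unfold kap; lra).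
  destruct (N_ratio_large (2 * s * ln A / kap)) as [i0 Hi0].
  destruct (INR_unbounded (- 2 * ln eps / kap)) as [ne Hne].
  set (i := (i0 + n0 + ne + 1)%nat). set (n := N (2*i+1)).
  assert (Hn : (2*i+1 <= n)%nat) by apply N_ge.
  exists n. split; [unfold i in Hn; lia|].
  specialize (Hi0 (2*i)%nat ltac:(unfold i; lia)).
  replace (S (2*i)) with (2*i+1)%nat in Hi0 by lia. fold n in Hi0.
  assert (Hblock : 2 * s * ln A * INR (N (2*i)) < kap * INR n) by (apply mul_lt_of_div_mul_lt; lra).
  assert (Heps_n : - 2 * ln eps < INR n * kap).
  { apply lt_mul_of_div_lt; auto. assert (INR ne <= INR n) by (apply le_INR; unfold i in Hn; lia). lra. }
  assert (Hs0 : 0 < s) by (assert (0 < ln 2 / ln A) by (apply Rdiv_lt_0_compat; [apply ln_gt_0|]; lra); lra).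
  pose proof (loglen_blockA_lower i n (le_n _)).
  assert (s * (ln A * (INR n - INR (N (2 * i)))) <= s * loglen n) by (apply Rmult_le_compat_l; lra).
  rewrite pow2_mul_Rpower_ell, <- (exp_ln eps Heps). apply exp_le.
  unfold kap in *. nra.
Qed.

Lemma level_delta_cover s n delta : 0 < s -> (1 <= n)%nat -> ell n < delta ->
  exists a b, delta_cover delta (inX A B N) a b /\
    forall m, fsum (fun i => pw (b i - a i) s) m <= 2 ^ n * Rpower (ell n) s.
Proof.
  intros Hs Hn1 Hell. pose proof (ell_pos n).
  exists (fun j => if (j <? 2^n)%nat then leftI A B N (nth j (words n) nil) else 0).
  exists (fun j => if (j <? 2^n)%nat then leftI A B N (nth j (words n) nil) + ell n else 0).
  split; [split|].
  - intros j. destruct (j <? 2^n)%nat; lra.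
  - intros y Hy. destruct (Hy n Hn1) as [w [Hw Hyw]].
    destruct (In_nth _ _ nil (words_In n w Hw)) as [j [Hj Hnth]].
    rewrite length_words in Hj. exists j. apply Nat.ltb_lt in Hj. rewrite Hj, Hnth.
    unfold inI in Hyw. rewrite Hw in Hyw. lra.
  - intros m. eapply Rle_trans; [apply (fsum_trunc _ (2^n) (Rpower (ell n) s))|].
    + intros j. destruct (j <? 2^n)%nat.
      * replace (leftI A B N (nth j (words n) nil) + ell n - leftI A B N (nth j (words n) nil)) with (ell n) by ring.
        rewrite pw_pos by lra. split; [left; apply Rpower_pos| lra].
      * replace (0 - 0) with 0 by ring. rewrite pw_zero by lra. split; [lra| left; apply Rpower_pos].
    + intros j Hj. assert ((j <? 2^n)%nat = false) by (apply Nat.ltb_ge; auto). rewrite H0.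
      replace (0 - 0) with 0 by ring. apply pw_zero; lra.
    + rewrite pow_INR. replace (INR 2) with 2 by (simpl; lra). lra.
Qed.

Lemma Hzero_upper s : ln 2 / ln A < s -> Hzero s (inX A B N).
Proof.
  intros Hs delta eps Hdel Heps.
  assert (Hs0 : 0 < s).
  { assert (0 < ln 2 / ln A) by (apply Rdiv_lt_0_compat; [apply ln_gt_0| apply lnA_pos]; lra). lra. }
  destruct (ell_small delta Hdel) as [nd Hnd].
  destruct (pow2_Rpower_ell_small s eps (S nd) Hs Heps) as [n [Hn Hcheap]].
  destruct (level_delta_cover s n delta Hs0 ltac:(lia) (Hnd n ltac:(lia))) as [a [b [Hcov Hsum]]].
  exists a, b. split; [exact Hcov|]. intros m. specialize (Hsum m). lra.
Qed.

Definition inside_ind m u v w := if Rlt_dec u (leftI A B N w) then if Rlt_dec (leftI A B N w + ell m) v then 1 else 0 else 0.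

Lemma inside_ind_01 m u v w : inside_ind m u v w = 0 \/ inside_ind m u v w = 1.
Proof. unfold inside_ind. destruct (Rlt_dec _ _); [destruct (Rlt_dec _ _)|]; auto. Qed.

Lemma inside_ind_bounds m u v w : 0 <= inside_ind m u v w <= 1.
Proof. destruct (inside_ind_01 m u v w) as [E|E]; rewrite E; lra. Qed.

Lemma inside_ind_neq0 m u v w : inside_ind m u v w <> 0 -> u < leftI A B N w /\ leftI A B N w + ell m < v.
Proof. unfold inside_ind. destruct (Rlt_dec _ _); [destruct (Rlt_dec _ _)|]; intros H; try lra; auto. Qed.

Lemma Rpower_invA_ge s : 0 <= s -> s * ln A <= ln 2 -> / 2 <= Rpower (/ A) s.
Proof.
  intros Hs H. unfold Rpower. rewrite ln_Rinv by lra.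
  replace (/2) with (exp (- ln 2)). apply exp_le. lra.
  rewrite exp_Ropp, exp_ln; lra.
Qed.

Lemma ell_Rpower_ge s n : 0 <= s -> s * ln A <= ln 2 -> (/2) ^ n <= Rpower (ell n) s.
Proof.
  intros Hs H. eapply Rle_trans; [| apply Rle_Rpower_l; [auto| split; [|apply ell_ge_pow]]].
  - rewrite Rpower_pow_base by (apply Rinv_0_lt_compat; lra). apply pow_incr.
    split; [lra| apply Rpower_invA_ge; auto].
  - apply pow_lt. apply Rinv_0_lt_compat; lra.
Qed.

Definition count_const s := 2 * Rpower (/ (B - 2)) s + 1.

Lemma count_const_bounds s : 0 <= s -> 1 <= count_const s /\ 2 <= count_const s * Rpower (B - 2) s.
Proof.
  intros Hs. unfold count_const. pose proof (Rpower_pos (/(B-2)) s). pose proof (Rpower_pos (B-2) s).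
  assert (E : Rpower (/ (B-2)) s * Rpower (B-2) s = 1).
  { rewrite <- Rpower_mul by (try apply Rinv_0_lt_compat; lra). rewrite Rinv_l by lra.
    unfold Rpower; rewrite ln_1, Rmult_0_r, exp_0; auto. }
  split; nra.
Qed.

Lemma sum_inside_ind_le_pow2 u v m : sum_words m (inside_ind m u v) <= 2 ^ m.
Proof.
  rewrite <- (Rmult_1_l (2^m)), <- sum_words_const. apply sum_words_le. intros; apply inside_ind_bounds.
Qed.

Lemma sum_inside_ind_eq0 u v m : v - u <= ell m -> sum_words m (inside_ind m u v) = 0.
Proof.
  intros H. rewrite (sum_words_ext _ _ (fun _ => 0)); [rewrite sum_words_const; ring|].
  intros w _. destruct (inside_ind_01 m u v w) as [E|E]; auto.
  destruct (inside_ind_neq0 m u v w) as [H1 H2]; lra.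
Qed.

Lemma sum_inside_ind_le_one u v m : v - u < (B-2) * ell m -> sum_words m (inside_ind m u v) <= 1.
Proof.
  intros Huv. pose proof (ell_pos m). apply sum_words_at_most_one.
  - intros w w' Hw Hw' Hg Hg'. apply inside_ind_neq0 in Hg. apply inside_ind_neq0 in Hg'.
    apply (short_interval_one_word u v m w w' (leftI A B N w) (leftI A B N w')); auto;
      try (unfold inI; rewrite ?Hw, ?Hw'); lra.
  - intros; apply inside_ind_bounds.
Qed.

Lemma sum_inside_ind_le_block u v k m : (k <= m)%nat -> v - u < (B-2) * ell k ->
  sum_words m (inside_ind m u v) <= 2 ^ (m - k).
Proof.
  intros Hkm Huv. pose proof (ell_pos m).
  replace m with (k + (m - k))%nat at 1 by lia. rewrite sum_words_app.
  apply sum_words_at_most_one.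
  - intros w w' Hw Hw' Hg Hg'.
    apply sum_words_neq0 in Hg; [|intros; apply inside_ind_bounds].
    apply sum_words_neq0 in Hg'; [|intros; apply inside_ind_bounds].
    destruct Hg as [z [Hz Hgz]]. destruct Hg' as [z' [Hz' Hgz']].
    apply inside_ind_neq0 in Hgz. apply inside_ind_neq0 in Hgz'.
    assert (Hl : length (w ++ z) = m) by (rewrite length_app; lia).
    assert (Hl' : length (w' ++ z') = m) by (rewrite length_app; lia).
    destruct (inI_sub w z) as [S1 S2]. destruct (inI_sub w' z') as [S1' S2'].
    rewrite Hl, Hw in S2. rewrite Hl', Hw' in S2'.
    apply (short_interval_one_word u v k w w' (leftI A B N (w ++ z)) (leftI A B N (w' ++ z'))); auto;
      unfold inI; rewrite ?Hw, ?Hw'; lra.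
  - intros w Hw. split; [apply sum_words_ge0; intros; apply inside_ind_bounds|].
    rewrite <- (Rmult_1_l (2^(m-k))), <- sum_words_const. apply sum_words_le.
    intros; apply inside_ind_bounds.
Qed.

(* The mass distribution principle in counting form; it rests on
   |I_n|^s >= 2^(-n) for s log A <= log 2. *)
Lemma sum_inside_ind_le s u v m : 0 <= s -> s * ln A <= ln 2 -> u < v ->
  sum_words m (inside_ind m u v) <= count_const s * 2 ^ m * Rpower (v - u) s.
Proof.
  intros Hs Hsl Huv. destruct (count_const_bounds s Hs) as [C1 C2].
  pose proof (Rpower_pos (v-u) s). pose proof (pow_lt 2 m ltac:(lra)).
  pose proof (sum_inside_ind_le_pow2 u v m).
  destruct (Rle_dec (B-2) (v-u)) as [HL|HL].
  { assert (Rpower (B-2) s <= Rpower (v-u) s) by (apply Rle_Rpower_l; lra).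
    assert (1 <= count_const s * Rpower (v - u) s) by nra. nra. }
  destruct (ball_level_exists (v-u)) as [k [Hk1 Hk2]]; [lra|].
  destruct (le_lt_dec k m) as [Hkm|Hkm].
  - eapply Rle_trans; [exact (sum_inside_ind_le_block u v k m Hkm Hk2)|].
    assert (HL2 : Rpower (B-2) s * ((/2) * (/2) ^ k) <= Rpower (v - u) s).
    { change (/ 2 * (/ 2) ^ k) with ((/ 2) ^ (S k)).
      eapply Rle_trans; [| apply Rle_Rpower_l; [auto| split; [|exact Hk1]]].
      - rewrite Rpower_mul by (try apply ell_pos; lra). apply Rmult_le_compat_l.
        left; apply Rpower_pos. apply ell_Rpower_ge; auto.
      - pose proof (ell_pos (S k)). nra. }
    assert (E1 : 2 ^ m = 2 ^ (m - k) * 2 ^ k) by (rewrite <- pow_add; f_equal; lia).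
    pose proof (pow2_mul_pow_half k). pose proof (pow_lt 2 (m-k) ltac:(lra)). pose proof (pow_lt 2 k ltac:(lra)).
    assert (1 <= count_const s * 2 ^ k * Rpower (v - u) s).
    { assert (Q : count_const s * 2 ^ k * (Rpower (B - 2) s * (/ 2 * (/ 2) ^ k))
                  <= count_const s * 2 ^ k * Rpower (v - u) s)
        by (apply Rmult_le_compat_l; [nra| exact HL2]).
      replace (count_const s * 2 ^ k * (Rpower (B - 2) s * (/ 2 * (/ 2) ^ k))) with
        ((count_const s * Rpower (B - 2) s) * / 2 * (2 ^ k * (/ 2) ^ k)) in Q by ring.
      rewrite pow2_mul_pow_half in Q. lra. }
    rewrite E1. nra.
  - destruct (Rle_dec (v - u) (ell m)) as [Hsmall|Hbig].
    { rewrite sum_inside_ind_eq0 by exact Hsmall. apply Rmult_le_pos; [apply Rmult_le_pos|]; lra. }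
    assert (ell k <= ell m) by (apply ell_mono; lia).
    pose proof (sum_inside_ind_le_one u v m ltac:(nra)).
    assert (Rpower (ell m) s <= Rpower (v - u) s) by (apply Rle_Rpower_l; [auto| split; [apply ell_pos| lra]]).
    pose proof (ell_Rpower_ge s m Hs Hsl). pose proof (pow2_mul_pow_half m).
    assert (1 <= 2 ^ m * Rpower (v - u) s).
    { assert (2 ^ m * (/2)^m <= 2 ^ m * Rpower (v - u) s) by (apply Rmult_le_compat_l; lra). lra. }
    assert (0 <= (count_const s - 1) * (2 ^ m * Rpower (v - u) s)) by (apply Rmult_le_pos; lra).
    nra.
Qed.

Section Compact.
Variables al be : nat -> R.
Hypothesis Hcov : forall x, inX A B N x -> exists i, al i < x < be i.

Definition finitely_covered w := exists m K, (length w <= m)%nat /\ forall v, length (w ++ v) = m ->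
  exists i, (i < K)%nat /\ al i < leftI A B N (w ++ v) /\ leftI A B N (w ++ v) + ell m < be i.

Lemma finitely_covered_split w : finitely_covered (w ++ false :: nil) -> finitely_covered (w ++ true :: nil) -> finitely_covered w.
Proof.
  intros [m1 [K1 [Hl1 H1]]] [m2 [K2 [Hl2 H2]]].
  rewrite length_app in Hl1, Hl2. simpl in Hl1, Hl2.
  exists (Nat.max m1 m2), (Nat.max K1 K2). split; [lia|].
  intros v Hv. rewrite length_app in Hv.
  destruct v as [|b v']; [simpl in Hv; lia|].
  assert (Hgen : forall mb Kb, (length w + 1 <= mb)%nat -> (mb <= Nat.max m1 m2)%nat -> (Kb <= Nat.max K1 K2)%nat ->
     (forall v, length ((w ++ b :: nil) ++ v) = mb -> exists i, (i < Kb)%nat /\ al i < leftI A B N ((w ++ b :: nil) ++ v) /\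
        leftI A B N ((w ++ b :: nil) ++ v) + ell mb < be i) ->
     exists i, (i < Nat.max K1 K2)%nat /\ al i < leftI A B N (w ++ b :: v') /\ leftI A B N (w ++ b :: v') + ell (Nat.max m1 m2) < be i).
  { intros mb Kb Hmb1 Hmb2 HKb Hb.
    set (t := (mb - (length w + 1))%nat).
    destruct (Hb (firstn t v')) as [i [Hi [Hi1 Hi2]]].
    { rewrite !length_app, length_firstn. simpl in Hv. simpl. lia. }
    exists i. split; [lia|].
    assert (E : w ++ b :: v' = ((w ++ b :: nil) ++ firstn t v') ++ skipn t v').
    { rewrite <- app_assoc, firstn_skipn, <- app_assoc. reflexivity. }
    rewrite E. destruct (inI_sub ((w ++ b :: nil) ++ firstn t v') (skipn t v')) as [S1 S2].
    rewrite <- E in S2 at 2. rewrite length_app in S2. simpl in Hv.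
    replace (length w + length (b :: v'))%nat with (Nat.max m1 m2) in S2 by (simpl; lia).
    assert (Hlen : length ((w ++ b :: nil) ++ firstn t v') = mb).
    { rewrite !length_app, length_firstn. simpl. lia. }
    rewrite Hlen in S2. rewrite <- E in S1, S2 |- *. split; lra. }
  destruct b.
  - apply (Hgen m2 K2); auto; lia.
  - apply (Hgen m1 K1); auto; lia.
Qed.

(* Compactness: if I_w is not finitely covered, neither is one of its two
   children, and the branch of such children converges to a point of X, which
   lies in some (al i, be i) together with a whole cylinder around it. *)
Fixpoint uncovered_branch (n : nat) : list bool :=
  match n with
  | O => nil
  | S k => if excluded_middle_informative (finitely_covered (uncovered_branch k ++ false :: nil)) then uncovered_branch k ++ true :: nil else uncovered_branch k ++ false :: nil
  end.

Lemma finite_subcover : exists m K, forall w, length w = m -> exists i, (i < K)%nat /\ al i < leftI A B N w /\ leftI A B N w + ell m < be i.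
Proof.
  destruct (classic (finitely_covered nil)) as [[m [K [_ H]]]|Hbad].
  - exists m, K. intros w Hw. apply (H w); auto.
  - assert (Hsq : forall n, ~ finitely_covered (uncovered_branch n)).
    { induction n; simpl; auto. destruct (excluded_middle_informative _) as [G|G]; auto.
      intros G'. apply IHn. apply finitely_covered_split; auto. }
    assert (Hnest : forall i, exists v, uncovered_branch (S i) = uncovered_branch i ++ v).
    { intros i; simpl. destruct (excluded_middle_informative _); eauto. }
    assert (Hlen : forall n, length (uncovered_branch n) = n).
    { induction n; simpl; auto. destruct (excluded_middle_informative _); rewrite length_app, IHn; simpl; lia. }
    destruct (nested_point uncovered_branch Hnest) as [x Hx].
    assert (HX : inX A B N x) by (apply (inX_of_nested uncovered_branch); auto; intros; rewrite Hlen; lia).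
    destruct (Hcov x HX) as [i [Hi1 Hi2]].
    destruct (ell_small (Rmin (x - al i) (be i - x))) as [n Hn]. { apply Rmin_pos; lra. }
    specialize (Hn n (le_n n)). pose proof (Rmin_l (x - al i) (be i - x)). pose proof (Rmin_r (x - al i) (be i - x)).
    exfalso; apply (Hsq n). exists n, (S i). split; [rewrite Hlen; lia|].
    intros v Hv. rewrite length_app, Hlen in Hv. destruct v; [|simpl in Hv; lia].
    rewrite app_nil_r. exists i. split; [lia|]. specialize (Hx n). unfold inI in Hx. rewrite Hlen in Hx. lra.
Qed.
End Compact.

Lemma finite_cover_count m K (al be : nat -> R) :
  (forall w, length w = m -> exists i, (i < K)%nat /\ al i < leftI A B N w /\ leftI A B N w + ell m < be i) ->
  2 ^ m <= fsum (fun i => sum_words m (inside_ind m (al i) (be i))) K.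
Proof.
  intros HK. rewrite <- sum_words_fsum, <- (Rmult_1_l (2^m)), <- sum_words_const.
  apply sum_words_le. intros w Hw. destruct (HK w Hw) as [i [Hi [H1 H2]]].
  eapply Rle_trans; [| apply (fsum_ge_term _ K i); auto; intros; apply inside_ind_bounds].
  unfold inside_ind. destruct (Rlt_dec _ _); [destruct (Rlt_dec _ _)|]; lra.
Qed.

Lemma sum_inside_enlarged_le s m a b h e : 0 <= s -> s * ln A <= ln 2 -> a <= b -> 0 < h ->
  b - a <= h -> Rpower h s <= e ->
  sum_words m (inside_ind m (a - h) (b + h)) <= count_const s * 2 ^ m * Rpower 3 s * e.
Proof.
  intros Hs Hsl Hab Hh Hbh He.
  eapply Rle_trans; [apply (sum_inside_ind_le s); auto; lra|].
  assert (Rpower (b + h - (a - h)) s <= Rpower 3 s * Rpower h s).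
  { rewrite <- Rpower_mul by lra. apply Rle_Rpower_l; auto. lra. }
  destruct (count_const_bounds s Hs). pose proof (pow_lt 2 m ltac:(lra)). pose proof (Rpower_pos 3 s).
  assert (0 <= count_const s * 2 ^ m) by nra.
  replace (count_const s * 2 ^ m * Rpower 3 s * e) with (count_const s * 2 ^ m * (Rpower 3 s * e)) by ring.
  apply Rmult_le_compat_l; [assumption|].
  assert (Rpower 3 s * Rpower h s <= Rpower 3 s * e) by (apply Rmult_le_compat_l; lra). lra.
Qed.

(* Each [a i, b i] is enlarged to an open interval of length at most 3 h i, where
   h i^s <= |b i - a i|^s + eps0 / 2^(i+1); compactness gives a finite subcover,
   and counting the level-m intervals inside it contradicts the smallness of the
   cover. *)
Lemma Hzero_lower s : 0 <= s -> s < ln 2 / ln A -> ~ Hzero s (inX A B N).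
Proof.
  intros Hs Hs2 HZ. pose proof lnA_pos.
  assert (Hsl : s * ln A <= ln 2) by (pose proof (mul_lt_of_lt_div _ _ _ H Hs2); lra).
  destruct (Req_dec s 0) as [Hs0|Hs0]; [subst s; exact (not_Hzero_0 _ HZ)|].
  destruct (count_const_bounds s Hs) as [C1 C2].
  set (T3 := Rpower 3 s). assert (HT3 : 0 < T3) by apply Rpower_pos.
  set (eps0 := / (4 * count_const s * T3)).
  assert (He0 : 0 < eps0) by (unfold eps0; apply Rinv_0_lt_compat; nra).
  destruct (HZ 1 eps0 ltac:(lra) He0) as [a [b [[Hab Hcov] Hsum]]].
  set (h := fun i => Rmax (b i - a i) (Rpower (eps0 / 2 ^ (S i)) (/ s))).
  assert (Hh : forall i, 0 < h i /\ b i - a i <= h i /\ Rpower (h i) s <= pw (b i - a i) s + eps0 / 2 ^ (S i)).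
  { intros i. apply Rmax_root_bounds; [lra| destruct (Hab i); lra|].
    apply Rdiv_lt_0_compat; auto. apply pow_lt; lra. }
  set (al := fun i => a i - h i). set (be := fun i => b i + h i).
  destruct (finite_subcover al be) as [m [K HK]].
  { intros x Hx. destruct (Hcov x Hx) as [i Hi]. exists i. unfold al, be. destruct (Hh i). lra. }
  pose proof (finite_cover_count m K al be HK) as Hcount.
  pose proof (pow_lt 2 m ltac:(lra)).
  assert (Hbnd : fsum (fun i => sum_words m (inside_ind m (al i) (be i))) K <=
                 fsum (fun i => count_const s * 2 ^ m * T3 * (pw (b i - a i) s + eps0 / 2 ^ (S i))) K).
  { apply fsum_le. intros i Hi. destruct (Hh i) as [h1 [h2 h3]].
    apply sum_inside_enlarged_le; auto; destruct (Hab i); lra. }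
  rewrite fsum_scal, fsum_plus, fsum_geom in Hbnd.
  specialize (Hsum K).
  assert (/ 2 ^ K > 0) by (apply Rinv_0_lt_compat, pow_lt; lra).
  assert (0 <= eps0 * / 2 ^ K) by (apply Rmult_le_pos; lra).
  assert (count_const s * 2 ^ m * T3 * (fsum (fun i => pw (b i - a i) s) K + eps0 * (1 - / 2 ^ K))
          <= count_const s * 2 ^ m * T3 * (2 * eps0)).
  { apply Rmult_le_compat_l; [|lra]. apply Rmult_le_pos; [apply Rmult_le_pos|]; lra. }
  assert (count_const s * 2 ^ m * T3 * (2 * eps0) = 2 ^ m / 2) by (unfold eps0; field; split; lra).
  lra.
Qed.

(** * Packing dimension *)

Definition ball_ind (c rad : R) m v := if Rle_dec (c - rad) (leftI A B N v) then
   if Rle_dec (leftI A B N v + ell m) (c + rad) then 1 else 0 else 0.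

Lemma ball_ind_01 c rad m v : ball_ind c rad m v = 0 \/ ball_ind c rad m v = 1.
Proof. unfold ball_ind. destruct (Rle_dec _ _); [destruct (Rle_dec _ _)|]; auto. Qed.

Lemma ball_ind_bounds c rad m v : 0 <= ball_ind c rad m v <= 1.
Proof. destruct (ball_ind_01 c rad m v) as [E|E]; rewrite E; lra. Qed.

Lemma sum_ball_ind_ge c rad d n m : (forall k, inI A B N (prefix d k) c) -> ell n <= rad -> (n <= m)%nat ->
  2 ^ (m - n) <= sum_words m (ball_ind c rad m).
Proof.
  intros Hd Hr Hnm. set (g := ball_ind c rad m).
  replace (sum_words m g) with (sum_words (n + (m - n)) g) by (f_equal; lia). rewrite sum_words_app. unfold g.
  eapply Rle_trans; [| apply (sum_words_ge_term _ _ (prefix d n)); [| apply prefix_length]].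
  - rewrite <- (Rmult_1_l (2 ^ (m - n))), <- sum_words_const. right. apply sum_words_ext. intros v Hv.
    unfold ball_ind. specialize (Hd n). unfold inI in Hd. rewrite prefix_length in Hd.
    destruct (inI_sub (prefix d n) v) as [S1 S2]. rewrite length_app, prefix_length, Hv in S2.
    replace (n + (m - n))%nat with m in S2 by lia. pose proof (ell_pos m).
    destruct (Rle_dec _ _); [destruct (Rle_dec _ _)|]; lra.
  - intros u Hu. apply sum_words_ge0. intros; apply ball_ind_bounds.
Qed.

Lemma two_Rpower_invB_lt_1 s : ln 2 / ln B < s -> 2 * Rpower (/ B) s < 1.
Proof.
  intros Hs. pose proof lnB_pos.
  assert (Hsl : ln 2 < s * ln B) by (apply lt_mul_of_div_lt; auto).
  unfold Rpower. rewrite ln_Rinv by lra.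
  assert (exp (s * - ln B) < exp (- ln 2)) by (apply exp_increasing; lra).
  rewrite exp_Ropp, exp_ln in H0 by lra. lra.
Qed.

(* With ell (n+1) <= rad < ell n, the ball B(c, rad) contains the level-(n+1)
   cylinder of c, and (2 rad)^s <= (2 B^(-n))^s. *)
Lemma packing_ball_weight s eta n0 c rad : 0 <= s -> 0 < eta ->
  (forall n, (n0 <= n)%nat -> (2 * Rpower (/ B) s) ^ n < eta / (2 * Rpower 2 s)) ->
  inX A B N c -> 0 < rad <= ell n0 / 2 ->
  exists n d, (forall j, inI A B N (prefix d j) c) /\ ell n <= rad /\ pw (2 * rad) s <= eta * (/2) ^ n.
Proof.
  intros Hs Heta Hn0 HX Hrad. pose proof (Rpower_pos 2 s).
  destruct (inX_address c HX) as [d Hd].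
  assert (ell n0 <= 1) by apply ell_le1. pose proof (ell_pos n0).
  destruct (ell_level_exists rad) as [n [Hn1 Hn2]]; [lra|].
  assert (Hnn0 : (n0 <= n)%nat).
  { destruct (le_lt_dec n0 n); auto. pose proof (ell_mono (S n) n0 ltac:(lia)). lra. }
  exists (S n), d. split; auto. split; auto.
  rewrite pw_pos by lra.
  eapply Rle_trans; [apply Rle_Rpower_l with (b := 2 * (/B) ^ n); [lra| split; [lra|]]|].
  { pose proof (ell_le_pow n). lra. }
  rewrite Rpower_mul, Rpower_pow_base by (try apply pow_lt; try apply Rinv_0_lt_compat; lra).
  specialize (Hn0 n Hnn0). rewrite Rpow_mult_distr in Hn0.
  assert (E : eta * (/2) ^ (S n) = (eta / (2 * Rpower 2 s)) * (/2)^n * Rpower 2 s) by (simpl; field; lra).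
  rewrite E. pose proof (pow_lt (/2) n ltac:(lra)).
  assert (T : 2 ^ n * Rpower (/ B) s ^ n * ((/2)^n * Rpower 2 s)
              <= eta / (2 * Rpower 2 s) * ((/2)^n * Rpower 2 s)).
  { apply Rmult_le_compat_r; [apply Rmult_le_pos| ]; lra. }
  replace (2 ^ n * Rpower (/ B) s ^ n * ((/2)^n * Rpower 2 s))
    with (Rpower 2 s * Rpower (/ B) s ^ n * (2 ^ n * (/ 2) ^ n)) in T by ring.
  rewrite pow2_mul_pow_half in T. lra.
Qed.

Lemma packing_sum_le_counts s eta k (c rad : nat -> R) : 0 < eta ->
  (forall i, (i < k)%nat -> exists n d, (forall j, inI A B N (prefix d j) (c i)) /\
     ell n <= rad i /\ pw (2 * rad i) s <= eta * (/2) ^ n) ->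
  exists M, fsum (fun i => pw (2 * rad i) s) k <=
            eta * (/2) ^ M * fsum (fun i => sum_words M (ball_ind (c i) (rad i) M)) k.
Proof.
  intros Heta Hball.
  assert (Hind : forall k', (k' <= k)%nat -> exists M, forall m, (M <= m)%nat ->
      fsum (fun i => pw (2 * rad i) s) k' <= eta * (/2) ^ m * fsum (fun i => sum_words m (ball_ind (c i) (rad i) m)) k').
  { induction k'; intros Hk'.
    - exists 0%nat. intros m _. simpl. lra.
    - destruct (IHk' ltac:(lia)) as [M HM].
      destruct (Hball k' ltac:(lia)) as [n [d [Hd [Hl Hpw]]]].
      exists (Nat.max M n). intros m Hm. rewrite !fsum_S.
      specialize (HM m ltac:(lia)).
      pose proof (sum_ball_ind_ge (c k') (rad k') d n m Hd Hl ltac:(lia)).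
      assert (E2 : (/2) ^ n = (/2) ^ m * 2 ^ (m - n)).
      { replace m with (n + (m - n))%nat at 1 by lia. rewrite pow_add.
        replace ((/ 2) ^ n * (/ 2) ^ (m - n) * 2 ^ (m - n)) with ((/ 2) ^ n * (2 ^ (m - n) * (/ 2) ^ (m - n))) by ring.
        rewrite pow2_mul_pow_half; ring. }
      assert (eta * (/2) ^ n <= eta * (/2) ^ m * sum_words m (ball_ind (c k') (rad k') m)).
      { rewrite E2, <- Rmult_assoc. apply Rmult_le_compat_l; auto.
        apply Rmult_le_pos; [lra| left; apply pow_lt; lra]. }
      lra. }
  destruct (Hind k (le_n k)) as [M HM]. exists M. apply HM; lia.
Qed.

Lemma sum_ball_ind_disjoint k (c rad : nat -> R) M :
  (forall i j, (i < k)%nat -> (j < k)%nat -> i <> j -> rad i + rad j < Rabs (c i - c j)) ->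
  sum_words M (fun w => fsum (fun i => ball_ind (c i) (rad i) M w) k) <= 2 ^ M.
Proof.
  intros Hdisj. rewrite <- (Rmult_1_l (2 ^ M)), <- sum_words_const. apply sum_words_le. intros v Hv.
  apply fsum_ind_le1.
  - intros; apply ball_ind_01.
  - intros i j Hi Hj Hij Fi Fj. specialize (Hdisj i j Hi Hj Hij).
    unfold ball_ind in Fi, Fj.
    destruct (Rle_dec _ _) in Fi; [destruct (Rle_dec _ _) in Fi|]; try lra.
    destruct (Rle_dec _ _) in Fj; [destruct (Rle_dec _ _) in Fj|]; try lra.
    pose proof (ell_pos M). unfold Rabs in Hdisj. destruct (Rcase_abs _); lra.
Qed.

Lemma P0_upper s : ln 2 / ln B < s -> P0_le s (inX A B N) 0.
Proof.
  intros Hs eta Heta. pose proof lnB_pos.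
  assert (Hs0 : 0 < s).
  { assert (0 < ln 2 / ln B) by (apply Rdiv_lt_0_compat; [apply ln_gt_0|]; lra). lra. }
  pose proof (two_Rpower_invB_lt_1 s Hs). pose proof (Rpower_pos 2 s). pose proof (Rpower_pos (/B) s).
  destruct (pow_small (2 * Rpower (/ B) s) (eta / (2 * Rpower 2 s))) as [n0 Hn0];
    [lra| apply Rdiv_lt_0_compat; lra|].
  exists (ell n0 / 2). split; [pose proof (ell_pos n0); lra|].
  intros k c rad [Hpk Hdisj]. rewrite Rplus_0_l.
  destruct (packing_sum_le_counts s eta k c rad Heta) as [M HM].
  { intros i Hi. destruct (Hpk i Hi) as [HX Hr]. apply (packing_ball_weight s eta n0); auto; lra. }
  rewrite <- sum_words_fsum in HM.
  pose proof (sum_ball_ind_disjoint k c rad M Hdisj).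
  pose proof (pow2_mul_pow_half M). pose proof (pow_lt (/2) M ltac:(lra)).
  assert (Hcount : eta * (/ 2) ^ M * sum_words M (fun w => fsum (fun i => ball_ind (c i) (rad i) M w) k)
                   <= eta * (/2)^M * 2 ^ M) by (apply Rmult_le_compat_l; [apply Rmult_le_pos|]; lra).
  replace (eta * (/ 2) ^ M * 2 ^ M) with (eta * (2 ^ M * (/2) ^ M)) in Hcount by ring.
  rewrite pow2_mul_pow_half in Hcount. lra.
Qed.

Lemma Pzero_upper s : ln 2 / ln B < s -> Pzero s (inX A B N).
Proof.
  intros Hs eps Heps. exists (fun _ => inX A B N), (fun _ => 0). split; [|split].
  - intros x Hx; exists 0%nat; auto.
  - intros i. apply P0_upper; auto.
  - intros n. rewrite fsum_const. lra.
Qed.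

Lemma pow2_Rpower_ell_unbounded s T n1 : 0 <= s -> s < ln 2 / ln B ->
  exists m, (n1 <= m)%nat /\ T < 2 ^ m * Rpower (ell m) s.
Proof.
  intros Hs Hs2. pose proof lnA_pos. pose proof lnB_pos.
  set (kap := ln 2 - s * ln B).
  assert (Hkap : 0 < kap) by (pose proof (mul_lt_of_lt_div _ _ _ H0 Hs2); unfold kap; lra).
  destruct (N_ratio_large (2 * s * ln A / kap)) as [j0 Hj0].
  destruct (INR_unbounded (2 * Rabs T / kap)) as [nT HnT].
  set (j := (j0 + n1 + nT + 1)%nat). set (m := N (2*j+2)).
  assert (Hm : (2*j+2 <= m)%nat) by apply N_ge.
  exists m. split; [unfold j in Hm; lia|].
  specialize (Hj0 (2*j+1)%nat ltac:(unfold j; lia)).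
  replace (S (2*j+1)) with (2*j+2)%nat in Hj0 by lia. fold m in Hj0.
  assert (Hblock : 2 * s * ln A * INR (N (2*j+1)) < kap * INR m) by (apply mul_lt_of_div_mul_lt; lra).
  assert (HTm : 2 * Rabs T < INR m * kap).
  { apply lt_mul_of_div_lt; auto. assert (INR nT <= INR m) by (apply le_INR; unfold j in Hm; lia). lra. }
  pose proof (loglen_blockB_upper j m (le_n _)) as Hlog.
  rewrite Nat.min_r in Hlog by (apply N_mono; lia).
  assert (s * loglen m <= s * (ln B * INR m + ln A * INR (N (2 * j + 1)))) by (apply Rmult_le_compat_l; lra).
  assert (Q : kap * INR m / 2 <= INR m * ln 2 - s * loglen m) by (unfold kap in *; nra).
  rewrite pow2_mul_Rpower_ell.
  pose proof (exp_ineq1_le (kap * INR m / 2)). pose proof (exp_le _ _ Q). pose proof (Rle_abs T). lra.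
Qed.

(* Points of F in the 2^(m-|w|) level-m subcylinders of I_w, with balls of radius
   (B-2)/3 |I_m|, form a packing: distinct level-m intervals are (B-2)|I_m| apart. *)
Lemma subcylinder_packing (F : R -> Prop) w m delta : (length w < m)%nat ->
  (B - 2) / 3 * ell m <= delta ->
  (forall v, (1 <= length v)%nat -> exists y, F y /\ inI A B N (w ++ v) y) ->
  exists c, delta_packing delta F (2 ^ (m - length w)) c (fun _ => (B - 2) / 3 * ell m).
Proof.
  intros Hm Hrad Hall.
  set (K := (2 ^ (m - length w))%nat). set (ws := words (m - length w)).
  assert (Hws : forall j, (j < K)%nat -> length (nth j ws nil) = (m - length w)%nat).
  { intros j Hj. apply words_length. apply nth_In. unfold ws; rewrite length_words. auto. }
  assert (Hex : forall j, exists y, (j < K)%nat -> F y /\ inI A B N (w ++ nth j ws nil) y).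
  { intros j. destruct (lt_dec j K) as [Hj|Hj].
    - destruct (Hall (nth j ws nil)) as [y Hy]; [rewrite (Hws j Hj); lia|]. exists y; auto.
    - exists 0; intros; lia. }
  exists (fun j => proj1_sig (constructive_indefinite_description _ (Hex j))).
  set (c := fun j => proj1_sig (constructive_indefinite_description _ (Hex j))).
  assert (Hc : forall j, (j < K)%nat -> F (c j) /\ inI A B N (w ++ nth j ws nil) (c j)).
  { intros j Hj. exact (proj2_sig (constructive_indefinite_description _ (Hex j)) Hj). }
  pose proof (ell_pos m). split.
  - intros j Hj. split; [apply Hc; auto|]. split; [nra| auto].
  - intros j j' Hj Hj' Hjj. fold c.
    assert (Hne : nth j ws nil <> nth j' ws nil).
    { intros E. apply Hjj. apply (NoDup_nth ws nil); auto. apply words_NoDup.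
      all: unfold ws; rewrite length_words; auto. }
    assert (Hne' : w ++ nth j ws nil <> w ++ nth j' ws nil) by (intros E; apply Hne; eapply app_inv_head; eauto).
    assert (Hl1 : length (w ++ nth j ws nil) = m) by (rewrite length_app, (Hws j Hj); lia).
    assert (Hl2 : length (w ++ nth j' ws nil) = m) by (rewrite length_app, (Hws j' Hj'); lia).
    destruct (Hc j Hj) as [_ I1]. destruct (Hc j' Hj') as [_ I2].
    unfold inI, leftI in I1, I2. rewrite Hl1 in I1. rewrite Hl2 in I2.
    destruct (leftI_aux_separated _ m _ 0 Hl1 Hl2 Hne') as [G|G]; simpl in G;
      unfold Rabs; destruct (Rcase_abs _); nra.
Qed.

Lemma P0_escape s F a : 0 <= s -> s < ln 2 / ln B -> P0_le s F a ->
  forall w, exists v, (1 <= length v)%nat /\ forall y, F y -> ~ inI A B N (w ++ v) y.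
Proof.
  intros Hs Hs2 HP w. apply NNPP. intros Hn.
  assert (Hall : forall v, (1 <= length v)%nat -> exists y, F y /\ inI A B N (w ++ v) y).
  { intros v Hv. apply NNPP. intros Hy. apply Hn. exists v. split; auto.
    intros y Fy Iy. apply Hy. eauto. }
  destruct (HP 1 ltac:(lra)) as [delta [Hdel Hpk]].
  set (kap := (B - 2) / 3). assert (Hkap : 0 < kap) by (unfold kap; lra).
  set (T := (a + 1) * 2 ^ length w / Rpower (2 * kap) s).
  destruct (ell_small (delta / kap)) as [nd Hnd]; [apply Rdiv_lt_0_compat; lra|].
  destruct (pow2_Rpower_ell_unbounded s T (nd + length w + 1) Hs Hs2) as [m [Hm HT]].
  pose proof (ell_pos m).
  assert (Hrad : kap * ell m <= delta).
  { specialize (Hnd m ltac:(lia)). pose proof (mul_lt_of_lt_div _ _ _ Hkap Hnd). lra. }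
  destruct (subcylinder_packing F w m delta ltac:(lia) Hrad Hall) as [c Hpack].
  specialize (Hpk _ c _ Hpack). cbv beta in Hpk. rewrite fsum_const, pw_pos in Hpk by nra.
  assert (E : INR (2 ^ (m - length w)) = 2 ^ m / 2 ^ length w).
  { rewrite pow_INR. replace (INR 2) with 2 by (simpl; lra).
    replace m with (length w + (m - length w))%nat at 2 by lia. rewrite pow_add. field. apply pow_nonzero; lra. }
  fold kap in Hpk. rewrite E in Hpk.
  replace (2 * (kap * ell m)) with (2 * kap * ell m) in Hpk by ring. rewrite Rpower_mul in Hpk by nra.
  pose proof (Rpower_pos (2 * kap) s). pose proof (pow_lt 2 (length w) ltac:(lra)).
  apply (Rmult_lt_compat_r (Rpower (2 * kap) s / 2 ^ length w)) in HT; [|apply Rdiv_lt_0_compat; lra].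
  unfold T in HT.
  replace ((a + 1) * 2 ^ length w / Rpower (2 * kap) s * (Rpower (2 * kap) s / 2 ^ length w)) with (a + 1) in HT by (field; lra).
  replace (2 ^ m * Rpower (ell m) s * (Rpower (2 * kap) s / 2 ^ length w))
    with (2 ^ m / 2 ^ length w * (Rpower (2 * kap) s * Rpower (ell m) s)) in HT by (field; lra).
  lra.
Qed.

Lemma Pzero_lower s : 0 <= s -> s < ln 2 / ln B -> ~ Pzero s (inX A B N).
Proof.
  intros Hs Hs2 HP. destruct (HP 1 ltac:(lra)) as [F [a [Hcov [HF _]]]].
  assert (esc : forall i w, exists v, (1 <= length v)%nat /\ forall y, F i y -> ~ inI A B N (w ++ v) y).
  { intros i. apply (P0_escape s (F i) (a i)); auto. }
  set (sqb := fix sqb (n : nat) : list bool := match n with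
         | O => nil
         | S i => sqb i ++ proj1_sig (constructive_indefinite_description _ (esc i (sqb i))) end).
  assert (Hstep : forall i, sqb (S i) = sqb i ++ proj1_sig (constructive_indefinite_description _ (esc i (sqb i)))) by reflexivity.
  assert (Hnest : forall i, exists v, sqb (S i) = sqb i ++ v) by (intros i; eexists; apply Hstep).
  assert (Hlen : forall i, (i <= length (sqb i))%nat).
  { induction i; [simpl; lia|]. rewrite Hstep, length_app.
    pose proof (proj1 (proj2_sig (constructive_indefinite_description _ (esc i (sqb i))))). lia. }
  destruct (nested_point sqb Hnest) as [x Hx].
  assert (HX : inX A B N x) by (apply (inX_of_nested sqb); auto).
  destruct (Hcov x HX) as [i Hi].
  apply (proj2 (proj2_sig (constructive_indefinite_description _ (esc i (sqb i)))) x Hi).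
  rewrite <- Hstep. apply Hx.
Qed.

Lemma dimensions : dimH (inX A B N) = ln 2 / ln A /\ dimP (inX A B N) = ln 2 / ln B /\
   dimH (inX A B N) < dimP (inX A B N).
Proof.
  pose proof lnA_pos. pose proof lnB_pos.
  assert (Hln2 : 0 < ln 2) by (apply ln_gt_0; lra).
  assert (E1 : dimH (inX A B N) = ln 2 / ln A).
  { unfold dimH. apply Rinf_unique. apply glb_threshold.
    - left; apply Rdiv_lt_0_compat; lra.
    - intros s Hs. apply Hzero_upper; auto.
    - intros s [Hs1 Hs2]. apply Hzero_lower; auto. }
  assert (E2 : dimP (inX A B N) = ln 2 / ln B).
  { unfold dimP. apply Rinf_unique. apply glb_threshold.
    - left; apply Rdiv_lt_0_compat; lra.
    - intros s Hs. apply Pzero_upper; auto.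
    - intros s [Hs1 Hs2]. apply Pzero_lower; auto. }
  split; auto. split; auto. rewrite E1, E2.
  unfold Rdiv. apply Rmult_lt_compat_l; auto. apply Rinv_lt_contravar. nra. apply ln_increasing; lra.
Qed.

(** * Masses of cylinders and balls *)

Section Measure.
Variables p q : R.
Hypothesis hp : 0 < p <= 1/2.
Hypothesis hq : 0 < q <= 1/2.
Hypothesis hexp : - ln p / ln A < - ln (1 - q) / ln B.

Notation rh := (rho p q N).
Notation muA := (muI_aux p q N).

Lemma rho_cases k : rh k = p \/ rh k = q.
Proof. unfold rho; destruct (excluded_middle_informative _); auto. Qed.

Lemma rho_pos k : 0 < rh k.
Proof. destruct (rho_cases k) as [->| ->]; lra. Qed.

Lemma rho_le k : rh k <= 1/2.
Proof. destruct (rho_cases k) as [->| ->]; lra. Qed.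

Lemma rho_blockA k i : (N (2*i) < k <= N (2*i+1))%nat -> rh k = p.
Proof.
  intros H. unfold rho. destruct (excluded_middle_informative _) as [_|Hn]; [reflexivity|].
  destruct (Hn (typeA_blockA k i H)).
Qed.

Lemma rho_blockB k i : (N (2*i+1) < k <= N (2*i+2))%nat -> rh k = q.
Proof.
  intros H. unfold rho. destruct (excluded_middle_informative _) as [Ht|_]; [|reflexivity].
  destruct (not_typeA_blockB k i H Ht).
Qed.

Lemma rr_rho_cases k : (r k = A /\ rh k = p) \/ (r k = B /\ rh k = q).
Proof. unfold rr, rho. destruct (excluded_middle_informative (typeA N k)); auto. Qed.

Lemma muI_aux_app w v k : muA (w ++ v) k = muA w k * muA v (k + length w).
Proof.
  revert k; induction w; intros k; simpl.
  - rewrite Nat.add_0_r; ring.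
  - rewrite IHw. replace (S k + length w)%nat with (k + S (length w))%nat by lia. ring.
Qed.

Lemma muI_aux_pos w k : 0 < muA w k.
Proof.
  revert k; induction w; intros k; simpl; [lra|].
  pose proof (rho_pos (S k)); pose proof (rho_le (S k)).
  apply Rmult_lt_0_compat; auto. destruct a; lra.
Qed.

Lemma muI_aux_le1 w k : muA w k <= 1.
Proof.
  revert k; induction w; intros k; simpl; [lra|].
  pose proof (rho_pos (S k)); pose proof (rho_le (S k)).
  pose proof (IHw (S k)); pose proof (muI_aux_pos w (S k)).
  destruct a; nra.
Qed.

Lemma muI_aux_sum n k : sum_words n (fun v => muA v k) = 1.
Proof.
  revert k; induction n; intros k.
  - rewrite sum_words_0; reflexivity.
  - rewrite sum_words_S. simpl. rewrite (sum_words_ext n _ (fun w => muA w (S k))).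
    apply IHn. intros; ring.
Qed.

Lemma muI_pos w : 0 < muI p q N w.
Proof. apply muI_aux_pos. Qed.

Lemma muI_le1 w : muI p q N w <= 1.
Proof. apply muI_aux_le1. Qed.

Lemma muI_repeat_false L : muI p q N (repeat false L) <= (/ 2) ^ L.
Proof.
  unfold muI. generalize 0%nat. induction L; intros k; simpl; [lra|].
  pose proof (rho_pos (S k)). pose proof (rho_le (S k)). pose proof (IHL (S k)).
  pose proof (muI_aux_pos (repeat false L) (S k)). nra.
Qed.

Lemma Sball_sum_words x r n : Sball A B p q N x r n =
  sum_words n (fun w => if Rle_dec (leftI A B N w) (x + r) then
              if Rle_dec (x - r) (leftI A B N w + ell n) then muI p q N w else 0
            else 0).
Proof. reflexivity. Qed.

Lemma Sball_nonneg x r n : 0 <= Sball A B p q N x r n.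
Proof.
  rewrite Sball_sum_words. apply sum_words_ge0. intros w _.
  pose proof (muI_aux_pos w 0).
  destruct (Rle_dec _ _); [destruct (Rle_dec _ _)|]; unfold muI; lra.
Qed.

Lemma muBall_glb x r : is_glb (fun y => exists n, y = Sball A B p q N x r n) (muBall A B p q N x r).
Proof.
  apply Rinf_glb. exists (Sball A B p q N x r 0); eauto.
  exists 0. intros y [n ->]. apply Sball_nonneg.
Qed.

Lemma muBall_le x r n : muBall A B p q N x r <= Sball A B p q N x r n.
Proof. apply (proj1 (muBall_glb x r)). eauto. Qed.

Lemma muBall_ge x r c : (forall n, c <= Sball A B p q N x r n) -> c <= muBall A B p q N x r.
Proof. intros H. apply (proj2 (muBall_glb x r)). intros y [n ->]. auto. Qed.

Lemma muBall_le1 x r : muBall A B p q N x r <= 1.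
Proof.
  eapply Rle_trans; [apply (muBall_le x r 0)|]. rewrite Sball_sum_words, sum_words_0.
  pose proof (muI_le1 nil). destruct (Rle_dec _ _); [destruct (Rle_dec _ _)|]; lra.
Qed.

Lemma muI_le_muBall x r w : inI A B N w x -> ell (length w) <= r -> muI p q N w <= muBall A B p q N x r.
Proof.
  intros Hx Hr. apply muBall_ge. intros n. rewrite Sball_sum_words.
  set (m := length w) in *.
  assert (Hnn : forall n w, length w = n -> 0 <= (if Rle_dec (leftI A B N w) (x + r) then
              if Rle_dec (x - r) (leftI A B N w + ell n) then muI p q N w else 0
            else 0)).
  { intros n0 w0 _. pose proof (muI_aux_pos w0 0).
    destruct (Rle_dec _ _); [destruct (Rle_dec _ _)|]; unfold muI; lra. }
  destruct (le_lt_dec m n) as [Hmn|Hmn].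
  - replace n with (m + (n - m))%nat by lia. rewrite sum_words_app.
    eapply Rle_trans; [|apply sum_words_ge_term; [|exact (eq_refl m)]].
    2:{ intros u Hu. apply sum_words_ge0. intros v Hv. apply Hnn. rewrite length_app; lia. }
    rewrite (sum_words_ext _ _ (fun v => muI p q N w * muA v m)).
    + rewrite sum_words_scal, muI_aux_sum by auto. lra.
    + intros v Hv. unfold inI in Hx. fold m in Hx. destruct (inI_sub w v) as [S1 S2].
      rewrite length_app in S2. fold m in S2. rewrite Hv in S2.
      pose proof (ell_pos (m + (n - m))).
      destruct (Rle_dec _ _); [destruct (Rle_dec _ _)|]; try lra.
      unfold muI. rewrite muI_aux_app; auto.
  - assert (Hw : w = firstn n w ++ skipn n w) by (symmetry; apply firstn_skipn).
    assert (Hl : length (firstn n w) = n) by (rewrite length_firstn; lia).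
    eapply Rle_trans; [|apply sum_words_ge_term; [apply Hnn| exact Hl]].
    assert (Hxu : inI A B N (firstn n w) x) by (apply (inI_app _ (skipn n w)); rewrite <- Hw; auto).
    unfold inI in Hxu. rewrite Hl in Hxu.
    pose proof (ell_pos n). pose proof (ell_pos m).
    assert (0 < r) by lra.
    destruct (Rle_dec _ _); [destruct (Rle_dec _ _)|]; try lra.
    unfold muI. rewrite Hw at 1. rewrite muI_aux_app; auto.
    pose proof (muI_aux_pos (firstn n w) 0).
    pose proof (muI_aux_le1 (skipn n w) (0 + length (firstn n w))). nra.
Qed.

(* By separation, I_w is the only interval of its level that meets the ball. *)
Lemma muBall_le_muI x r w : inI A B N w x -> 0 < r -> r < (B-2) * ell (length w) -> muBall A B p q N x r <= muI p q N w.
Proof.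
  intros Hx Hr0 Hr. eapply Rle_trans; [apply (muBall_le x r (length w))|].
  rewrite Sball_sum_words. set (m := length w) in *.
  rewrite (sum_words_single _ _ w).
  - pose proof (muI_aux_pos w 0).
    destruct (Rle_dec _ _); [destruct (Rle_dec _ _)|]; unfold muI in *; lra.
  - intros u Hu Hne. unfold inI, leftI in *. fold m in Hx.
    pose proof (ell_pos m).
    destruct (leftI_aux_separated u m w 0 Hu eq_refl Hne) as [G|G]; simpl in G.
    + destruct (Rle_dec _ _); [destruct (Rle_dec _ _)|]; auto. nra.
    + destruct (Rle_dec _ _); auto. nra.
  - reflexivity.
Qed.

Notation ldim_ratio x := (fun r => ln (muBall A B p q N x r) / ln r).

Definition digit_prob d n := if (d n : bool) then 1 - rh (S n) else rh (S n).

Definition logmass d n := - ln (muI p q N (prefix d n)).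

Definition step_max := - ln p - ln q.

Lemma step_max_pos : 0 < step_max.
Proof. unfold step_max. pose proof (ln_lt_0 p ltac:(lra) ltac:(lra)). pose proof (ln_lt_0 q ltac:(lra) ltac:(lra)). lra. Qed.

Lemma muI_prefix_S d n : muI p q N (prefix d (S n)) = muI p q N (prefix d n) * digit_prob d n.
Proof.
  unfold muI. simpl prefix. rewrite muI_aux_app, prefix_length. simpl. unfold digit_prob. ring.
Qed.

Lemma digit_prob_bounds d n : rh (S n) <= digit_prob d n /\ digit_prob d n < 1.
Proof. unfold digit_prob. pose proof (rho_pos (S n)); pose proof (rho_le (S n)). destruct (d n); lra. Qed.

Lemma neg_ln_digit_prob_bounds d n : 0 < - ln (digit_prob d n) <= - ln (rh (S n)) /\ - ln (rh (S n)) <= step_max.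
Proof.
  destruct (digit_prob_bounds d n). pose proof (rho_pos (S n)).
  pose proof (ln_lt_0 (digit_prob d n) ltac:(lra) H0).
  pose proof (ln_le _ _ H1 H).
  pose proof (ln_lt_0 p ltac:(lra) ltac:(lra)). pose proof (ln_lt_0 q ltac:(lra) ltac:(lra)).
  unfold step_max. destruct (rho_cases (S n)) as [E|E]; rewrite E in *; lra.
Qed.

Lemma logmass_S d n : logmass d (S n) = logmass d n - ln (digit_prob d n).
Proof.
  unfold logmass. rewrite muI_prefix_S, ln_mult; [ring| apply muI_pos|]. destruct (digit_prob_bounds d n).
  pose proof (rho_pos (S n)); lra.
Qed.

Lemma logmass_0 d : logmass d 0 = 0.
Proof. unfold logmass; simpl. unfold muI; simpl. rewrite ln_1; ring. Qed.

Lemma logmass_nonneg d n : 0 <= logmass d n.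
Proof. unfold logmass. pose proof (ln_le_0 _ (muI_pos (prefix d n)) (muI_le1 _)). lra. Qed.

Lemma logmass_add d n k : logmass d (n + k) <= logmass d n + step_max * INR k.
Proof.
  induction k. rewrite Nat.add_0_r; simpl; lra.
  rewrite Nat.add_succ_r, logmass_S, S_INR. destruct (neg_ln_digit_prob_bounds d (n+k)). lra.
Qed.

Section AlongAddress.
Variable x : R.
Variable d : nat -> bool.
Hypothesis Hd : forall n, inI A B N (prefix d n) x.

Lemma muBall_pos r : 0 < r -> 0 < muBall A B p q N x r.
Proof.
  intros Hr. destruct (ell_small r Hr) as [n0 Hn0].
  eapply Rlt_le_trans; [apply (muI_pos (prefix d n0))|].
  apply muI_le_muBall; auto. rewrite prefix_length. left; apply Hn0; lia.
Qed.

Lemma logmass_le_neg_ln_muBall rad n : 0 < rad -> rad < (B-2) * ell n ->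
  logmass d n <= - ln (muBall A B p q N x rad).
Proof.
  intros Hr0 Hr. pose proof (muBall_pos rad Hr0).
  assert (muBall A B p q N x rad <= muI p q N (prefix d n)) by (apply muBall_le_muI; rewrite ?prefix_length; auto).
  unfold logmass. pose proof (ln_le _ _ H H0). lra.
Qed.

Lemma neg_ln_muBall_le_logmass rad n : ell n <= rad -> - ln (muBall A B p q N x rad) <= logmass d n.
Proof.
  intros Hr. pose proof (muI_pos (prefix d n)).
  pose proof (muI_le_muBall x rad (prefix d n) (Hd n) ltac:(rewrite prefix_length; lra)).
  unfold logmass. pose proof (ln_le _ _ H H0). lra.
Qed.

Lemma ldim_ratio_eq r : 0 < r -> ldim_ratio x r = (- ln (muBall A B p q N x r)) / (- ln r).
Proof.
  intros Hr. destruct (Req_dec (ln r) 0) as [E|E].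
  - rewrite E. unfold Rdiv. rewrite Ropp_0, Rinv_0. ring.
  - field; auto.
Qed.

Lemma ldim_ratio_nonneg r : 0 < r < 1 -> 0 <= ldim_ratio x r.
Proof.
  intros Hr. cbv beta; rewrite ldim_ratio_eq by lra.
  pose proof (ln_le_0 _ (muBall_pos r ltac:(lra)) (muBall_le1 x r)).
  pose proof (ln_lt_0 r ltac:(lra) ltac:(lra)).
  unfold Rdiv. apply Rmult_le_pos; [lra|]. left; apply Rinv_0_lt_compat; lra.
Qed.

Lemma ldim_ratio_eventually_gt c : (exists n1, forall n, (n1 <= n)%nat -> c * loglen n <= logmass d n) ->
  forall eps, 0 < eps -> exists delta, 0 < delta /\ forall rad, 0 < rad < delta -> c - eps < ldim_ratio x rad.
Proof.
  intros [n1 Hn1] eps Heps.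
  set (C := ln A + Rabs (ln (B-2))).
  assert (HC : 0 <= C) by (pose proof lnA_pos; pose proof (Rabs_pos (ln (B-2))); unfold C; lra).
  destruct (loglen_dominates eps (Rabs c * C) Heps) as [n2 Hn2].
  destruct (ball_level_eventually (n1 + n2)) as [delta [Hdel Hlev]].
  exists delta. split; [exact Hdel|]. intros rad Hr.
  destruct (Hlev rad Hr) as [Hr1 [n [Hn [Hlo Hhi]]]].
  cbv beta; rewrite ldim_ratio_eq by lra.
  apply (div_gt_of_linear_bounds c eps (loglen n) C (logmass d n)); auto.
  - apply logmass_nonneg.
  - split; [pose proof (ln_lt_0 rad ltac:(lra) Hr1); lra| apply neg_ln_le_loglen; exact Hlo].
  - apply logmass_le_neg_ln_muBall; lra.
  - apply Hn1; lia.
  - apply Hn2; lia.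
Qed.

Lemma ldim_ratio_frequently_le c : (forall n1, exists n, (n1 <= n)%nat /\ logmass d n <= c * loglen n) ->
  forall delta, 0 < delta -> exists rad, 0 < rad < delta /\ ldim_ratio x rad <= c.
Proof.
  intros H delta Hdel. destruct (ell_small (Rmin delta 1)) as [n0 Hn0]; [apply Rmin_pos; lra|].
  destruct (H (S n0)) as [n [Hn Hc]].
  specialize (Hn0 n ltac:(lia)). pose proof (Rmin_l delta 1). pose proof (Rmin_r delta 1).
  pose proof (ell_pos n) as Hell.
  exists (ell n). split; [lra|].
  cbv beta; rewrite ldim_ratio_eq by lra.
  assert (HL : 0 < loglen n).
  { pose proof (loglen_ge n). pose proof lnB_pos.
    assert (1 <= INR n) by (replace 1 with (INR 1) by reflexivity; apply le_INR; lia). nra. }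
  apply Rle_trans with (logmass d n / loglen n); [|apply div_le_of_le_mul; auto].
  apply ratio_le; [|unfold loglen in *; lra]. split.
  - pose proof (ln_le_0 _ (muBall_pos (ell n) Hell) (muBall_le1 x (ell n))). lra.
  - apply neg_ln_muBall_le_logmass; lra.
Qed.

Lemma ldim_ratio_eventually_lt c : (exists n1, forall n, (n1 <= n)%nat -> logmass d n <= c * loglen n) ->
  forall eps, 0 < eps -> exists delta, 0 < delta /\ forall rad, 0 < rad < delta -> ldim_ratio x rad < c + eps.
Proof.
  intros [n1 Hn1] eps Heps.
  destruct (pow_small (/B) (B-2)) as [K HK];
    [split; [left; apply Rinv_0_lt_compat| apply Rinv_lt_1]; lra| lra|].
  specialize (HK K (le_n K)).
  set (E := Rabs (ln (B-2))). set (D := step_max * INR (S K)).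
  assert (HD : 0 <= D) by (unfold D; pose proof step_max_pos; pose proof (pos_INR (S K)); nra).
  destruct (loglen_dominates eps (D + Rabs c * E + eps * E) Heps) as [n2 Hn2].
  destruct (ball_level_eventually (n1 + n2)) as [delta [Hdel Hlev]].
  exists delta. split; [exact Hdel|]. intros rad Hr.
  destruct (Hlev rad Hr) as [Hr1 [n [Hn [Hlo Hhi]]]].
  assert (Hell : ell (S n + K) <= rad).
  { pose proof (ell_add (S n) K). pose proof (ell_pos (S n)).
    assert (ell (S n) * (/B)^K <= ell (S n) * (B-2)) by (apply Rmult_le_compat_l; lra). nra. }
  assert (Hu : - ln (muBall A B p q N x rad) <= logmass d n + D).
  { pose proof (neg_ln_muBall_le_logmass rad (S n + K) Hell).
    pose proof (logmass_add d n (S K)). replace (n + S K)%nat with (S n + K)%nat in * by lia.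
    unfold D; lra. }
  cbv beta; rewrite ldim_ratio_eq by lra.
  apply (div_lt_of_linear_bounds c eps (loglen n) E D (logmass d n)); auto.
  - apply Rabs_pos.
  - split; [|exact Hu]. pose proof (ln_le_0 _ (muBall_pos rad ltac:(lra)) (muBall_le1 x rad)). lra.
  - apply loglen_le_neg_ln; lra.
  - apply Hn1; lia.
  - apply Hn2; lia.
Qed.

Lemma ldim_ratio_frequently_gt c : (forall n1, exists n, (n1 <= n)%nat /\ c * loglen n <= logmass d n) ->
  forall eps, 0 < eps -> forall delta, 0 < delta -> exists rad, 0 < rad < delta /\ c - eps < ldim_ratio x rad.
Proof.
  intros H eps Heps delta Hdel.
  set (kap := Rmin 1 ((B-2)/2)).
  assert (Hk : 0 < kap <= 1 /\ kap < B - 2).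
  { unfold kap. pose proof (Rmin_l 1 ((B-2)/2)). pose proof (Rmin_r 1 ((B-2)/2)).
    split; [split; [apply Rmin_pos; lra| lra]| lra]. }
  set (E := Rabs (ln kap)).
  destruct (loglen_dominates eps (Rabs c * E) Heps) as [n2 Hn2].
  destruct (ell_small (Rmin delta 1)) as [n0 Hn0]; [apply Rmin_pos; lra|].
  destruct (H (n0 + n2)%nat) as [n [Hn Hc]].
  specialize (Hn0 n ltac:(lia)). pose proof (Rmin_l delta 1). pose proof (Rmin_r delta 1).
  pose proof (ell_pos n).
  exists (kap * ell n). split; [split; nra|].
  assert (Hv : - ln (kap * ell n) <= loglen n + E).
  { unfold loglen. rewrite ln_mult by lra.
    pose proof (Rle_abs (- ln kap)) as Q. rewrite Rabs_Ropp in Q. unfold E. lra. }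
  cbv beta; rewrite ldim_ratio_eq by nra.
  apply (div_gt_of_linear_bounds c eps (loglen n) E (logmass d n)); auto.
  - apply Rabs_pos.
  - apply logmass_nonneg.
  - split; [pose proof (ln_lt_0 (kap * ell n) ltac:(nra) ltac:(nra)); lra| exact Hv].
  - apply logmass_le_neg_ln_muBall; nra.
  - apply Hn2; lia.
Qed.

End AlongAddress.

(** * Bounds on the local dimensions at every point *)

Definition dl_min := - ln (1 - p) / ln A.

Definition dl_max := - ln p / ln A.

Definition du_min := - ln (1 - q) / ln B.

Definition du_max := - ln q / ln B.

Lemma neg_ln_prob_bounds : 0 < - ln (1 - p) <= - ln p /\ 0 < - ln (1 - q) <= - ln q.
Proof.
  pose proof (ln_lt_0 (1-p) ltac:(lra) ltac:(lra)). pose proof (ln_lt_0 (1-q) ltac:(lra) ltac:(lra)).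
  pose proof (ln_le p (1-p) ltac:(lra) ltac:(lra)). pose proof (ln_le q (1-q) ltac:(lra) ltac:(lra)).
  lra.
Qed.

Lemma ldim_bounds_order : 0 < dl_min /\ dl_min <= dl_max /\ dl_max < du_min /\ du_min <= du_max.
Proof.
  pose proof neg_ln_prob_bounds. pose proof lnA_pos. pose proof lnB_pos.
  unfold dl_min, dl_max, du_min, du_max. unfold Rdiv. split; [|split; [|split]].
  - apply Rmult_lt_0_compat; [lra| apply Rinv_0_lt_compat; lra].
  - apply Rmult_le_compat_r; [left; apply Rinv_0_lt_compat|]; lra.
  - exact hexp.
  - apply Rmult_le_compat_r; [left; apply Rinv_0_lt_compat|]; lra.
Qed.

Lemma div_lnA_mul c : c / ln A * ln A = c.
Proof. pose proof lnA_pos. field. lra. Qed.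

Lemma div_lnB_mul c : c / ln B * ln B = c.
Proof. pose proof lnB_pos. field. lra. Qed.

Lemma neg_ln_digit_prob_between d k : - ln (1 - rh (S k)) <= - ln (digit_prob d k) <= - ln (rh (S k)).
Proof.
  pose proof (rho_pos (S k)); pose proof (rho_le (S k)).
  assert (rh (S k) <= digit_prob d k <= 1 - rh (S k)) by (unfold digit_prob; destruct (d k); lra).
  pose proof (ln_le _ _ H (proj1 H1)). pose proof (ln_le (digit_prob d k) (1 - rh (S k)) ltac:(lra) ltac:(lra)).
  lra.
Qed.

Section LocalBounds.
Variable x : R.
Variable d : nat -> bool.
Hypothesis Hd : forall n, inI A B N (prefix d n) x.

Let digit_step k := - ln (digit_prob d k).

Lemma logmass_step : forall n, logmass d (S n) = logmass d n + digit_step n.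
Proof. intros n; rewrite logmass_S; unfold digit_step; ring. Qed.

Lemma digit_step_lower k : dl_min * ln (r (S k)) <= digit_step k.
Proof.
  pose proof (neg_ln_digit_prob_between d k). pose proof ldim_bounds_order. pose proof neg_ln_prob_bounds. pose proof lnB_pos.
  unfold digit_step. destruct (rr_rho_cases (S k)) as [[E1 E2]|[E1 E2]]; rewrite E1; rewrite E2 in H.
  - unfold dl_min. rewrite div_lnA_mul. lra.
  - assert (dl_min * ln B <= du_min * ln B) by (apply Rmult_le_compat_r; lra).
    unfold du_min in H3. rewrite div_lnB_mul in H3. lra.
Qed.

Lemma digit_step_upper k : digit_step k <= du_max * ln (r (S k)).
Proof.
  pose proof (neg_ln_digit_prob_between d k). pose proof ldim_bounds_order. pose proof neg_ln_prob_bounds. pose proof lnA_pos.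
  unfold digit_step. destruct (rr_rho_cases (S k)) as [[E1 E2]|[E1 E2]]; rewrite E1; rewrite E2 in H.
  - assert (dl_max * ln A <= du_max * ln A) by (apply Rmult_le_compat_r; lra).
    unfold dl_max in H3. rewrite div_lnA_mul in H3. lra.
  - unfold du_max. rewrite div_lnB_mul. lra.
Qed.

Lemma digit_step_range k : 0 <= digit_step k <= step_max.
Proof. unfold digit_step. destruct (neg_ln_digit_prob_bounds d k). lra. Qed.

Lemma digit_step_blockA k i : (N (2*i) < S k <= N (2*i+1))%nat -> digit_step k <= dl_max * ln A.
Proof.
  intros H. pose proof (rho_blockA (S k) i H) as E. pose proof (neg_ln_digit_prob_between d k).
  rewrite E in H0. unfold dl_max; rewrite div_lnA_mul. unfold digit_step; lra.
Qed.

Lemma digit_step_blockB k i : (N (2*i+1) < S k <= N (2*i+2))%nat -> du_min * ln B <= digit_step k.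
Proof.
  intros H. pose proof (rho_blockB (S k) i H) as E. pose proof (neg_ln_digit_prob_between d k).
  rewrite E in H0. unfold du_min; rewrite div_lnB_mul. unfold digit_step; lra.
Qed.

Lemma lower_ldim_bounds dl : lower_ldim A B p q N x dl -> dl_min <= dl <= dl_max.
Proof.
  intros H. unfold lower_ldim in H. pose proof ldim_bounds_order. split.
  - apply (liminf_ge _ _ _ H). apply (ldim_ratio_eventually_gt x d Hd). exists 0%nat. intros n _.
    apply (sum_lower_of_steps (logmass d) digit_step (logmass_0 d) logmass_step). apply digit_step_lower.
  - apply (liminf_le _ _ _ H). intros eps Heps delta Hdel.
    destruct (ldim_ratio_frequently_le x d Hd (dl_max + eps/2)) with (delta := delta) as [rad [Hr Hf]]; auto.
    + intros n1. apply (sum_frequently_le (logmass d) digit_step (logmass_0 d) logmass_step dl_max step_max); try lra.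
      apply digit_step_range. apply digit_step_blockA.
    + exists rad; split; auto; lra.
Qed.

Lemma upper_ldim_bounds du : upper_ldim A B p q N x du -> du_min <= du <= du_max.
Proof.
  intros H. unfold upper_ldim in H. pose proof ldim_bounds_order. split.
  - apply (limsup_ge _ _ _ H). intros eps Heps delta Hdel.
    destruct (ldim_ratio_frequently_gt x d Hd (du_min - eps/2)) with (eps := eps/2) (delta := delta) as [rad [Hr Hf]]; try lra.
    + intros n1. apply (sum_frequently_ge (logmass d) digit_step (logmass_0 d) logmass_step du_min); try lra.
      intros k; apply digit_step_range. apply digit_step_blockB.
    + exists rad; split; auto; lra.
  - apply (limsup_le _ _ _ H). apply (ldim_ratio_eventually_lt x d Hd). exists 0%nat. intros n _.
    apply (sum_upper_of_steps (logmass d) digit_step (logmass_0 d) logmass_step). apply digit_step_upper.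
Qed.

Lemma lower_ldim_exists : exists dl, lower_ldim A B p q N x dl.
Proof.
  apply liminf_exists.
  - exists 0. exists 1. split; [lra|]. intros rad Hr. apply (ldim_ratio_nonneg x d Hd); auto.
  - exists du_max. intros delta Hdel. apply (ldim_ratio_frequently_le x d Hd du_max); auto.
    intros n1. exists n1. split; auto. apply (sum_upper_of_steps (logmass d) digit_step (logmass_0 d) logmass_step). apply digit_step_upper.
Qed.

Lemma upper_ldim_exists : exists du, upper_ldim A B p q N x du.
Proof.
  destruct (liminf_exists (fun rad => - (ln (muBall A B p q N x rad) / ln rad))) as [e He].
  - destruct (ldim_ratio_eventually_lt x d Hd du_max) with (eps := 1) as [delta [Hdel Hf]]; [|lra|].
    + exists 0%nat. intros n _. apply (sum_upper_of_steps (logmass d) digit_step (logmass_0 d) logmass_step). apply digit_step_upper.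
    + exists (- (du_max + 1)). exists delta. split; auto. intros rad Hr. specialize (Hf rad Hr). simpl in Hf. lra.
  - exists 0. intros delta Hdel. exists (Rmin delta 1 / 2).
    pose proof (Rmin_l delta 1). pose proof (Rmin_r delta 1). pose proof (Rmin_pos delta 1 Hdel ltac:(lra)).
    split; [lra|]. pose proof (ldim_ratio_nonneg x d Hd (Rmin delta 1 / 2) ltac:(lra)). simpl in H2. lra.
  - exists (- e). unfold upper_ldim. apply (limsup_of_liminf (fun rad => ln (muBall A B p q N x rad) / ln rad)). exact He.
Qed.

End LocalBounds.

Lemma local_dims_bounds x : inX A B N x ->
     exists dl du, lower_ldim A B p q N x dl /\ upper_ldim A B p q N x du /\
       - ln (1 - p) / ln A <= dl <= - ln p / ln A /\
       - ln (1 - q) / ln B <= du <= - ln q / ln B.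
Proof.
  intros HX. destruct (inX_address x HX) as [d Hd].
  destruct (lower_ldim_exists x d Hd) as [dl Hdl]. destruct (upper_ldim_exists x d Hd) as [du Hdu].
  exists dl, du. split; auto. split; auto. split.
  - exact (lower_ldim_bounds x d Hd dl Hdl).
  - exact (upper_ldim_bounds x d Hd du Hdu).
Qed.

Lemma lower_ldim_lt_upper x : inX A B N x -> forall dl du,
     lower_ldim A B p q N x dl -> upper_ldim A B p q N x du -> dl < du.
Proof.
  intros HX dl du H1 H2. destruct (inX_address x HX) as [d Hd].
  pose proof (lower_ldim_bounds x d Hd dl H1). pose proof (upper_ldim_bounds x d Hd du H2).
  pose proof ldim_bounds_order. lra.
Qed.

(** * Local dimensions at typical points *)

Definition step_entropy k := entropy (rh (S k)).

Definition centered_step k (b : bool) := - ln (if b then 1 - rh (S k) else rh (S k)) - step_entropy k.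

Fixpoint deviation (w : list bool) (k : nat) : R :=
  match w with nil => 0 | b :: w' => centered_step k b + deviation w' (S k) end.

(* Expectation under mu of a function of the digits k+1, ..., k+n. *)
Definition expect n k (g : list bool -> R) := sum_words n (fun w => muA w k * g w).

Lemma expect_S n k g : expect (S n) k g = rh (S k) * expect n (S k) (fun w => g (false :: w)) + (1 - rh (S k)) * expect n (S k) (fun w => g (true :: w)).
Proof.
  unfold expect. rewrite sum_words_S, <- !sum_words_scal, <- sum_words_plus. apply sum_words_ext. intros w _. simpl. ring.
Qed.

Lemma expect_lin n k c0 c1 c2 c3 c4 g1 g2 g3 g4 :
  expect n k (fun w => c0 + c1 * g1 w + c2 * g2 w + c3 * g3 w + c4 * g4 w) =
  c0 + c1 * expect n k g1 + c2 * expect n k g2 + c3 * expect n k g3 + c4 * expect n k g4.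
Proof.
  unfold expect. rewrite (sum_words_ext _ _ (fun w => c0 * muA w k + c1 * (muA w k * g1 w) + c2 * (muA w k * g2 w)
     + c3 * (muA w k * g3 w) + c4 * (muA w k * g4 w))) by (intros; ring).
  rewrite !sum_words_plus, !sum_words_scal, muI_aux_sum. ring.
Qed.

Lemma expect_ext n k g h : (forall w, g w = h w) -> expect n k g = expect n k h.
Proof. intros H. unfold expect. apply sum_words_ext. intros; rewrite H; auto. Qed.

Lemma expect_nonneg n k g : (forall w, 0 <= g w) -> 0 <= expect n k g.
Proof. intros H. unfold expect. apply sum_words_ge0. intros w _. pose proof (muI_aux_pos w k). pose proof (H w). nra. Qed.

Lemma step_entropy_bounds k : - ln (1 - rh (S k)) <= step_entropy k <= - ln (rh (S k)).
Proof.
  unfold step_entropy, entropy. pose proof (rho_pos (S k)). pose proof (rho_le (S k)).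
  pose proof (ln_le (rh (S k)) (1 - rh (S k)) ltac:(lra) ltac:(lra)).
  split; nra.
Qed.

Lemma centered_step_mean k : rh (S k) * centered_step k false + (1 - rh (S k)) * centered_step k true = 0.
Proof. unfold centered_step, step_entropy, entropy. ring. Qed.

Lemma centered_step_bounds k b : - step_max <= centered_step k b <= step_max.
Proof.
  pose proof (step_entropy_bounds k). pose proof (rho_pos (S k)). pose proof (rho_le (S k)).
  pose proof (ln_le (rh (S k)) (1 - rh (S k)) ltac:(lra) ltac:(lra)).
  pose proof (ln_lt_0 (1 - rh (S k)) ltac:(lra) ltac:(lra)).
  destruct (neg_ln_digit_prob_bounds (fun _ => false) k) as [_ G]. unfold digit_prob in G.
  unfold centered_step. destruct b; lra.
Qed.

Lemma centered_step_pow_bounds k b : centered_step k b ^ 2 <= step_max ^ 2 /\ centered_step k b ^ 4 <= step_max ^ 4.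
Proof.
  destruct (centered_step_bounds k b). pose proof step_max_pos.
  assert (centered_step k b ^ 2 <= step_max ^ 2) by nra. split; auto.
  assert (0 <= centered_step k b ^ 2) by nra.
  replace (centered_step k b ^ 4) with ((centered_step k b ^ 2) ^ 2) by ring.
  replace (step_max ^ 4) with ((step_max ^ 2) ^ 2) by ring. nra.
Qed.

Lemma expect_deviation n : forall k, expect n k (fun w => deviation w k) = 0.
Proof.
  induction n; intros k. unfold expect. rewrite sum_words_0. simpl. ring.
  rewrite expect_S. cbn [deviation].
  assert (E : forall b, expect n (S k) (fun w => centered_step k b + deviation w (S k)) = centered_step k b).
  { intros b. rewrite (expect_ext _ _ _ (fun w => centered_step k b + 1 * deviation w (S k) + 0 * 0 + 0 * 0 + 0 * 0)) by (intros; ring).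
    rewrite expect_lin, IHn. ring. }
  rewrite !E. apply centered_step_mean.
Qed.

Lemma expect_deviation_sq n : forall k, expect n k (fun w => deviation w k ^ 2) <= INR n * step_max ^ 2.
Proof.
  induction n; intros k. unfold expect. rewrite sum_words_0. simpl. lra.
  rewrite expect_S. cbn [deviation].
  assert (E : forall b, expect n (S k) (fun w => (centered_step k b + deviation w (S k)) ^ 2) =
      centered_step k b ^ 2 + expect n (S k) (fun w => deviation w (S k) ^ 2)).
  { intros b. rewrite (expect_ext _ _ _ (fun w => centered_step k b ^ 2 + (2 * centered_step k b) * deviation w (S k) + 1 * deviation w (S k) ^ 2 + 0 * 0 + 0 * 0)) by (intros; ring).
    rewrite expect_lin, expect_deviation. ring. }
  rewrite !E. specialize (IHn (S k)). rewrite S_INR.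
  destruct (centered_step_pow_bounds k false). destruct (centered_step_pow_bounds k true). pose proof (rho_pos (S k)). pose proof (rho_le (S k)).
  nra.
Qed.

(* With Y the first centred step and D the rest, E[(Y+D)^4] =
   E[Y^4] + 6 E[Y^2] E[D^2] + E[D^4], because Y is independent of D and both are centred. *)
Lemma expect_deviation_pow4 n : forall k, expect n k (fun w => deviation w k ^ 4) <= 3 * INR n ^ 2 * step_max ^ 4.
Proof.
  induction n; intros k. unfold expect. rewrite sum_words_0. simpl. lra.
  rewrite expect_S. cbn [deviation].
  set (E2 := expect n (S k) (fun w => deviation w (S k) ^ 2)).
  set (E3 := expect n (S k) (fun w => deviation w (S k) ^ 3)).
  set (E4 := expect n (S k) (fun w => deviation w (S k) ^ 4)).
  assert (E : forall b, expect n (S k) (fun w => (centered_step k b + deviation w (S k)) ^ 4) =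
      centered_step k b ^ 4 + 6 * centered_step k b ^ 2 * E2 + 4 * centered_step k b * E3 + E4).
  { intros b. rewrite (expect_ext _ _ _ (fun w => centered_step k b ^ 4 + (4 * centered_step k b ^ 3) * deviation w (S k)
        + (6 * centered_step k b ^ 2) * deviation w (S k) ^ 2 + (4 * centered_step k b) * deviation w (S k) ^ 3 + 1 * deviation w (S k) ^ 4)) by (intros; ring).
    rewrite expect_lin, expect_deviation. unfold E2, E3, E4. ring. }
  rewrite !E.
  set (a := rh (S k)). set (Y0 := centered_step k false). set (Y1 := centered_step k true).
  assert (Hm : a * Y0 + (1 - a) * Y1 = 0) by apply centered_step_mean.
  replace (a * (Y0 ^ 4 + 6 * Y0 ^ 2 * E2 + 4 * Y0 * E3 + E4) + (1 - a) * (Y1 ^ 4 + 6 * Y1 ^ 2 * E2 + 4 * Y1 * E3 + E4))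
    with ((a * Y0 ^ 4 + (1 - a) * Y1 ^ 4) + 6 * E2 * (a * Y0 ^ 2 + (1 - a) * Y1 ^ 2) + 4 * E3 * (a * Y0 + (1 - a) * Y1) + E4) by ring.
  rewrite Hm.
  pose proof (expect_deviation_sq n (S k)) as H2. fold E2 in H2. specialize (IHn (S k)). fold E4 in IHn.
  assert (HE2 : 0 <= E2) by (apply expect_nonneg; intros; apply pow2_ge_0).
  destruct (centered_step_pow_bounds k false) as [A1 A2]. destruct (centered_step_pow_bounds k true) as [B1 B2]. fold Y0 in A1, A2. fold Y1 in B1, B2.
  pose proof (rho_pos (S k)). pose proof (rho_le (S k)). fold a in H, H0.
  assert (a * Y0 ^ 4 + (1 - a) * Y1 ^ 4 <= step_max ^ 4) by nra.
  assert (a * Y0 ^ 2 + (1 - a) * Y1 ^ 2 <= step_max ^ 2) by nra.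
  assert (0 <= a * Y0 ^ 2 + (1 - a) * Y1 ^ 2) by (pose proof (pow2_ge_0 Y0); pose proof (pow2_ge_0 Y1); nra).
  assert (6 * E2 * (a * Y0 ^ 2 + (1 - a) * Y1 ^ 2) <= 6 * (INR n * step_max ^ 2) * step_max ^ 2) by nra.
  rewrite S_INR. pose proof (pos_INR n). pose proof step_max_pos.
  assert (0 <= step_max ^ 4) by (apply pow_le; lra).
  replace (step_max ^ 4) with (step_max ^ 2 * step_max ^ 2) in * by ring. nra.
Qed.

Lemma deviation_app w v k : deviation (w ++ v) k = deviation w k + deviation v (k + length w).
Proof.
  revert k; induction w; intros k; simpl.
  - rewrite Nat.add_0_r; ring.
  - rewrite IHw. replace (S k + length w)%nat with (k + S (length w))%nat by lia. ring.
Qed.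

Lemma deviation_prefix d n : deviation (prefix d n) 0 = logmass d n - fsum step_entropy n.
Proof.
  induction n. simpl. rewrite logmass_0; ring.
  simpl prefix. rewrite deviation_app, IHn, prefix_length, logmass_S. simpl deviation. unfold centered_step, digit_prob. simpl. ring.
Qed.

Definition ent_dimA := entropy p / ln A.

Definition ent_dimB := entropy q / ln B.

Definition bad_threshold n := INR n ^ 3 * sqrt (INR n).

Lemma entropy_bounds : entropy p <= - ln p /\ - ln (1 - q) <= entropy q.
Proof.
  pose proof (ln_le p (1-p) ltac:(lra) ltac:(lra)). pose proof (ln_le q (1-q) ltac:(lra) ltac:(lra)).
  unfold entropy. split; nra.
Qed.

Lemma ent_dims_order : ent_dimA <= ent_dimB /\ 0 <= ent_dimA.
Proof.
  pose proof ldim_bounds_order. destruct entropy_bounds. pose proof lnA_pos. pose proof lnB_pos.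
  assert (ent_dimA <= dl_max) by (unfold ent_dimA, dl_max, Rdiv; apply Rmult_le_compat_r; [left; apply Rinv_0_lt_compat|]; lra).
  assert (du_min <= ent_dimB) by (unfold ent_dimB, du_min, Rdiv; apply Rmult_le_compat_r; [left; apply Rinv_0_lt_compat|]; lra).
  split; [lra|]. unfold ent_dimA, entropy. apply Rmult_le_pos; [|left; apply Rinv_0_lt_compat; lra].
  pose proof (ln_lt_0 p ltac:(lra) ltac:(lra)). pose proof (ln_lt_0 (1-p) ltac:(lra) ltac:(lra)). nra.
Qed.

Lemma step_entropy_lower k : ent_dimA * ln (r (S k)) <= step_entropy k.
Proof.
  destruct ent_dims_order. pose proof lnB_pos. unfold step_entropy.
  destruct (rr_rho_cases (S k)) as [[E1 E2]|[E1 E2]]; rewrite E1, E2.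
  - unfold ent_dimA. rewrite div_lnA_mul. lra.
  - assert (ent_dimA * ln B <= ent_dimB * ln B) by (apply Rmult_le_compat_r; lra). unfold ent_dimB in H2. rewrite div_lnB_mul in H2. lra.
Qed.

Lemma step_entropy_upper k : step_entropy k <= ent_dimB * ln (r (S k)).
Proof.
  destruct ent_dims_order. pose proof lnA_pos. unfold step_entropy.
  destruct (rr_rho_cases (S k)) as [[E1 E2]|[E1 E2]]; rewrite E1, E2.
  - assert (ent_dimA * ln A <= ent_dimB * ln A) by (apply Rmult_le_compat_r; lra). unfold ent_dimA in H2. rewrite div_lnA_mul in H2. lra.
  - unfold ent_dimB. rewrite div_lnB_mul. lra.
Qed.

Lemma step_entropy_range k : 0 <= step_entropy k <= step_max.
Proof.
  pose proof (step_entropy_bounds k). destruct (neg_ln_digit_prob_bounds (fun _ => false) k) as [_ G].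
  pose proof (rho_pos (S k)). pose proof (rho_le (S k)).
  pose proof (ln_lt_0 (1 - rh (S k)) ltac:(lra) ltac:(lra)). lra.
Qed.

Lemma step_entropy_blockA k i : (N (2*i) < S k <= N (2*i+1))%nat -> step_entropy k <= ent_dimA * ln A.
Proof. intros H. pose proof (rho_blockA (S k) i H) as E. unfold step_entropy. rewrite E. unfold ent_dimA. rewrite div_lnA_mul. lra. Qed.

Lemma step_entropy_blockB k i : (N (2*i+1) < S k <= N (2*i+2))%nat -> ent_dimB * ln B <= step_entropy k.
Proof. intros H. pose proof (rho_blockB (S k) i H) as E. unfold step_entropy. rewrite E. unfold ent_dimB. rewrite div_lnB_mul. lra. Qed.

Section Typical.
Variable x : R.
Variable d : nat -> bool.
Hypothesis Hd : forall n, inI A B N (prefix d n) x.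
Hypothesis Hdev : exists n0, forall n, (n0 <= n)%nat -> deviation (prefix d n) 0 ^ 4 <= bad_threshold n.

Lemma deviation_small eta : 0 < eta -> exists n1, forall n, (n1 <= n)%nat -> Rabs (logmass d n - fsum step_entropy n) <= eta * loglen n.
Proof.
  intros Heta. destruct Hdev as [n0 Hn0]. pose proof lnB_pos.
  set (et := eta * ln B). assert (Het : 0 < et) by (unfold et; nra).
  destruct (INR_unbounded ((/ et ^ 4) ^ 2)) as [n2 Hn2].
  exists (n0 + n2 + 1)%nat. intros n Hn.
  rewrite <- deviation_prefix.
  assert (HnR : INR n2 <= INR n) by (apply le_INR; lia).
  assert (Hn1 : 1 <= INR n) by (replace 1 with (INR 1) by reflexivity; apply le_INR; lia).
  assert (Hsq : / et ^ 4 <= sqrt (INR n)).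
  { rewrite <- (sqrt_pow2 (/ et ^ 4)). apply sqrt_le_1_alt. lra.
    left; apply Rinv_0_lt_compat, pow_lt; auto. }
  assert (Hsqn : sqrt (INR n) * sqrt (INR n) = INR n) by (apply sqrt_sqrt; lra).
  assert (Hs0 : 0 < sqrt (INR n)) by (apply sqrt_lt_R0; lra).
  assert (bad_threshold n <= (et * INR n) ^ 4).
  { unfold bad_threshold. assert (1 <= et ^ 4 * sqrt (INR n)).
    { assert (0 < et ^ 4) by (apply pow_lt; auto).
      apply Rmult_le_compat_l with (r := et ^ 4) in Hsq; [|lra]. rewrite Rinv_r in Hsq; lra. }
    assert (Q : INR n ^ 3 * sqrt (INR n) * (et ^ 4 * sqrt (INR n)) = INR n ^ 3 * et ^ 4 * (sqrt (INR n) * sqrt (INR n))) by ring.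
    rewrite Hsqn in Q.
    replace ((et * INR n) ^ 4) with (INR n ^ 3 * sqrt (INR n) * (et ^ 4 * sqrt (INR n))) by (rewrite Q; ring).
    assert (0 <= INR n ^ 3 * sqrt (INR n)) by (apply Rmult_le_pos; [apply pow_le|]; lra).
    nra. }
  pose proof (Hn0 n ltac:(lia)).
  assert (Q3 : Rabs (deviation (prefix d n) 0) <= et * INR n) by (apply Rabs_le_of_pow4_le; [nra| lra]).
  pose proof (loglen_ge n). unfold et in Q3.
  assert (eta * (INR n * ln B) <= eta * loglen n) by (apply Rmult_le_compat_l; lra). lra.
Qed.

Let cum_entropy := fsum step_entropy.

Lemma cum_entropy_0 : cum_entropy 0%nat = 0.
Proof. reflexivity. Qed.

Lemma cum_entropy_S : forall n, cum_entropy (S n) = cum_entropy n + step_entropy n.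
Proof. intros; reflexivity. Qed.

Lemma typical_lower_ldim : lower_ldim A B p q N x ent_dimA.
Proof.
  intros eps Heps. destruct ent_dims_order as [HAB HA0]. split.
  - destruct (ldim_ratio_eventually_gt x d Hd (ent_dimA - eps/2)) with (eps := eps/2) as [delta [Hdel Hf]]; [| lra |].
    + destruct (deviation_small (eps/2) ltac:(lra)) as [n1 Hn1]. exists n1. intros n Hn.
      specialize (Hn1 n Hn). pose proof (sum_lower_of_steps cum_entropy step_entropy cum_entropy_0 cum_entropy_S ent_dimA step_entropy_lower n).
      unfold cum_entropy in *. pose proof (Rle_abs (- (logmass d n - fsum step_entropy n))). rewrite Rabs_Ropp in H0. lra.
    + exists delta. split; auto. intros rad Hr. specialize (Hf rad Hr). lra.
  - intros delta Hdel.
    destruct (ldim_ratio_frequently_le x d Hd (ent_dimA + eps/2)) with (delta := delta) as [rad [Hr Hf]]; auto.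
    + intros n1. destruct (deviation_small (eps/4) ltac:(lra)) as [n2 Hn2].
      destruct (sum_frequently_le cum_entropy step_entropy cum_entropy_0 cum_entropy_S ent_dimA step_max HA0 step_entropy_range step_entropy_blockA (eps/4) ltac:(lra) (n1 + n2)) as [n [Hn Hc]].
      exists n. split; [lia|]. specialize (Hn2 n ltac:(lia)). unfold cum_entropy in *.
      pose proof (Rle_abs (logmass d n - fsum step_entropy n)). lra.
    + exists rad. split; auto. lra.
Qed.

Lemma typical_upper_ldim : upper_ldim A B p q N x ent_dimB.
Proof.
  intros eps Heps. destruct ent_dims_order as [HAB HA0]. split.
  - destruct (ldim_ratio_eventually_lt x d Hd (ent_dimB + eps/2)) with (eps := eps/2) as [delta [Hdel Hf]]; [| lra |].
    + destruct (deviation_small (eps/2) ltac:(lra)) as [n1 Hn1]. exists n1. intros n Hn.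
      specialize (Hn1 n Hn). pose proof (sum_upper_of_steps cum_entropy step_entropy cum_entropy_0 cum_entropy_S ent_dimB step_entropy_upper n).
      unfold cum_entropy in *. pose proof (Rle_abs (logmass d n - fsum step_entropy n)). lra.
    + exists delta. split; auto. intros rad Hr. specialize (Hf rad Hr). lra.
  - intros delta Hdel.
    destruct (ldim_ratio_frequently_gt x d Hd (ent_dimB - eps/2)) with (eps := eps/2) (delta := delta) as [rad [Hr Hf]]; try lra.
    + intros n1. destruct (deviation_small (eps/4) ltac:(lra)) as [n2 Hn2].
      destruct (sum_frequently_ge cum_entropy step_entropy cum_entropy_0 cum_entropy_S ent_dimB ltac:(lra) (fun k => proj1 (step_entropy_range k)) step_entropy_blockB (eps/4) ltac:(lra) (n1 + n2)) as [n [Hn Hc]].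
      exists n. split; [lia|]. specialize (Hn2 n ltac:(lia)). unfold cum_entropy in *.
      pose proof (Rle_abs (- (logmass d n - fsum step_entropy n))). rewrite Rabs_Ropp in H. lra.
    + exists rad. split; auto. lra.
Qed.
End Typical.

Definition is_bad n0 n w : bool := if le_dec n0 n then (if Rlt_dec (bad_threshold n) (deviation w 0 ^ 4) then true else false) else false.

Definition bad_mass n0 n w := if is_bad n0 n w then muI p q N w else 0.

Lemma bad_mass_nonneg n0 n w : 0 <= bad_mass n0 n w.
Proof. unfold bad_mass. destruct (is_bad n0 n w); [left; apply muI_pos| lra]. Qed.

(* Chebyshev's inequality for the fourth moment. *)
Lemma bad_mass_level_le n0 n : (1 <= n)%nat -> sum_words n (bad_mass n0 n) <= 3 * step_max ^ 4 / (INR n * sqrt (INR n)).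
Proof.
  intros Hn. assert (Hn1 : 1 <= INR n) by (replace 1 with (INR 1) by reflexivity; apply le_INR; auto).
  assert (HT : 0 < bad_threshold n) by (unfold bad_threshold; apply Rmult_lt_0_compat; [apply pow_lt; lra| apply sqrt_lt_R0; lra]).
  apply Rle_trans with (/ bad_threshold n * expect n 0 (fun w => deviation w 0 ^ 4)).
  - unfold expect. rewrite <- sum_words_scal. apply sum_words_le. intros w _. unfold bad_mass, is_bad.
    pose proof (muI_pos w). unfold muI in *.
    destruct (le_dec n0 n); [destruct (Rlt_dec _ _)|].
    + assert (1 <= / bad_threshold n * deviation w 0 ^ 4).
      { apply Rmult_le_reg_l with (bad_threshold n); auto. rewrite <- Rmult_assoc, Rinv_r by lra. lra. }
      nra.
    + assert (0 <= / bad_threshold n * (muI_aux p q N w 0 * deviation w 0 ^ 4)); [|lra].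
      apply Rmult_le_pos; [left; apply Rinv_0_lt_compat; auto|]. apply Rmult_le_pos; [lra|].
      replace (deviation w 0 ^ 4) with ((deviation w 0 ^ 2) ^ 2) by ring. apply pow2_ge_0.
    + assert (0 <= / bad_threshold n * (muI_aux p q N w 0 * deviation w 0 ^ 4)); [|lra].
      apply Rmult_le_pos; [left; apply Rinv_0_lt_compat; auto|]. apply Rmult_le_pos; [lra|].
      replace (deviation w 0 ^ 4) with ((deviation w 0 ^ 2) ^ 2) by ring. apply pow2_ge_0.
  - pose proof (expect_deviation_pow4 n 0).
    assert (/ bad_threshold n * expect n 0 (fun w => deviation w 0 ^ 4) <= / bad_threshold n * (3 * INR n ^ 2 * step_max ^ 4)).
    { apply Rmult_le_compat_l; auto. left; apply Rinv_0_lt_compat; auto. }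
    eapply Rle_trans; [exact H0|]. right. unfold bad_threshold. field.
    split; [apply Rgt_not_eq, sqrt_lt_R0; lra| lra].
Qed.

Lemma bad_mass_level_0 n0 n : (n < n0)%nat -> sum_words n (bad_mass n0 n) = 0.
Proof.
  intros H. rewrite (sum_words_ext _ _ (fun _ => 0)). rewrite sum_words_const; ring.
  intros w _. unfold bad_mass, is_bad. destruct (le_dec n0 n); [lia| auto].
Qed.

Lemma bad_mass_sum_le n0 M : (2 <= n0)%nat ->
  fsum (fun n => sum_words n (bad_mass n0 n)) M <= 6 * step_max ^ 4 * (/ sqrt (INR (n0 - 1)) - / sqrt (INR (Nat.max M n0 - 1))).
Proof.
  intros Hn0. pose proof step_max_pos. assert (HG : 0 < step_max ^ 4) by (apply pow_lt; lra).
  induction M.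
  - simpl. replace (Nat.max 0 n0) with n0 by lia. lra.
  - rewrite fsum_S. destruct (le_lt_dec n0 M) as [HM|HM].
    + rewrite Nat.max_l in IHM by lia. rewrite Nat.max_l by lia.
      pose proof (bad_mass_level_le n0 M ltac:(lia)). pose proof (inv_pow32_le_telescope M ltac:(lia)).
      replace (S M - 1)%nat with M by lia.
      assert (3 * step_max ^ 4 / (INR M * sqrt (INR M)) <= 6 * step_max ^ 4 * (/ sqrt (INR (M - 1)) - / sqrt (INR M))).
      { unfold Rdiv. replace (6 * step_max ^ 4 * (/ sqrt (INR (M - 1)) - / sqrt (INR M))) with
          (3 * step_max ^ 4 * (2 * (/ sqrt (INR (M - 1)) - / sqrt (INR M)))) by ring.
        apply Rmult_le_compat_l; lra. }
      lra.
    + rewrite bad_mass_level_0 by auto. rewrite Nat.max_r in IHM by lia. rewrite Nat.max_r by lia. lra.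
Qed.

(* Enumeration of all words: index 2^n + t, with t < 2^n, is the t-th word of
   length n. *)
Definition word_at i := nth (i - 2 ^ (Nat.log2 i)) (words (Nat.log2 i)) nil.

Definition bad_mass_at n0 i := if (1 <=? i)%nat then bad_mass n0 (Nat.log2 i) (word_at i) else 0.

Lemma bad_mass_at_block_sum n0 m : fsum (bad_mass_at n0) (2 ^ m) = fsum (fun n => sum_words n (bad_mass n0 n)) m.
Proof.
  induction m.
  - simpl. unfold bad_mass_at. simpl. ring.
  - rewrite fsum_S. replace (2 ^ S m)%nat with (2 ^ m + 2 ^ m)%nat by (simpl; lia).
    rewrite fsum_split, IHm. f_equal.
    rewrite (fsum_ext _ (fun t => bad_mass n0 m (nth t (words m) nil))).
    + rewrite <- (length_words m), fsum_nth. reflexivity.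
    + intros t Ht. unfold bad_mass_at, word_at. assert (Hle : (1 <=? 2 ^ m + t)%nat = true).
      { apply Nat.leb_le. pose proof (Nat.pow_nonzero 2 m ltac:(lia)). lia. }
      rewrite Hle, log2_block by auto. f_equal. f_equal. lia.
Qed.

(* Index i covers word_at i if that word is bad; otherwise it is padded with a
   cylinder of mass at most 2^(-(i+K0)), so the padding has total mass <= 2^(1-K0). *)
Definition bad_cover n0 K0 i := if ((1 <=? i)%nat && is_bad n0 (Nat.log2 i) (word_at i))%bool then word_at i else repeat false (i + K0).

Lemma bad_cover_mass n0 K0 L : (2 <= n0)%nat ->
  fsum (fun i => muI p q N (bad_cover n0 K0 i)) L <= 6 * step_max ^ 4 * / sqrt (INR (n0 - 1)) + 2 * (/ 2) ^ K0.
Proof.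
  intros Hn0. eapply Rle_trans.
  - apply (fsum_le _ (fun i => bad_mass_at n0 i + (/ 2) ^ (i + K0))). intros i _.
    unfold bad_cover, bad_mass_at. destruct (1 <=? i)%nat; simpl.
    + unfold bad_mass. destruct (is_bad n0 (Nat.log2 i) (word_at i)).
      * pose proof (pow_lt (/2) (i + K0) ltac:(lra)). lra.
      * pose proof (muI_repeat_false (i + K0)). lra.
    + pose proof (muI_repeat_false (i + K0)). lra.
  - rewrite fsum_plus. pose proof (fsum_geom2 K0 L).
    assert (fsum (bad_mass_at n0) L <= fsum (bad_mass_at n0) (2 ^ L)).
    { apply fsum_mono. intros i. unfold bad_mass_at. destruct (1 <=? i)%nat; [apply bad_mass_nonneg| lra].
      apply Nat.lt_le_incl, Nat.pow_gt_lin_r; lia. }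
    rewrite bad_mass_at_block_sum in H0. pose proof (bad_mass_sum_le n0 L Hn0).
    assert (0 < / sqrt (INR (Nat.max L n0 - 1))).
    { apply Rinv_0_lt_compat, sqrt_lt_R0. apply lt_0_INR. lia. }
    pose proof step_max_pos. assert (0 < step_max ^ 4) by (apply pow_lt; lra).
    assert (0 < 6 * step_max ^ 4 * / sqrt (INR (Nat.max L n0 - 1))) by (apply Rmult_lt_0_compat; lra).
    lra.
Qed.

Lemma bad_cover_catches n0 K0 x d n : (forall k, inI A B N (prefix d k) x) -> (n0 <= n)%nat ->
  bad_threshold n < deviation (prefix d n) 0 ^ 4 -> exists i, inI A B N (bad_cover n0 K0 i) x.
Proof.
  intros Hd Hn0 Hbad.
  destruct (In_nth (words n) (prefix d n) nil (words_In n _ (prefix_length d n))) as [t [Ht Hnth]].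
  rewrite length_words in Ht. exists (2 ^ n + t)%nat.
  assert (Hle : (1 <=? 2 ^ n + t)%nat = true).
  { apply Nat.leb_le. pose proof (Nat.pow_nonzero 2 n ltac:(lia)). lia. }
  assert (Hw : word_at (2 ^ n + t) = prefix d n).
  { unfold word_at. rewrite log2_block by auto. replace (2 ^ n + t - 2 ^ n)%nat with t by lia. auto. }
  unfold bad_cover. rewrite Hle, Hw. unfold is_bad. rewrite log2_block by auto.
  destruct (le_dec n0 n); [|lia]. destruct (Rlt_dec _ _); [apply Hd| lra].
Qed.

Lemma typical_ldims_ae : mu_null A B p q N (fun x => inX A B N x /\
     ~ (lower_ldim A B p q N x (entropy p / ln A) /\ upper_ldim A B p q N x (entropy q / ln B))).
Proof.
  intros eps Heps. pose proof step_max_pos. assert (HG : 0 < step_max ^ 4) by (apply pow_lt; lra).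
  set (y := 12 * step_max ^ 4 / eps).
  assert (Hy : 0 < y) by (unfold y; apply Rdiv_lt_0_compat; lra).
  destruct (INR_unbounded (y ^ 2)) as [m0 Hm0].
  set (n0 := (m0 + 2)%nat).
  assert (Hsq : y <= sqrt (INR (n0 - 1))).
  { assert (INR m0 <= INR (n0 - 1)) by (apply le_INR; unfold n0; lia).
    rewrite <- (sqrt_pow2 y) by lra. apply sqrt_le_1_alt. lra. }
  destruct (pow_small (/2) (eps / 4)) as [K0 HK0]; [split; [left; apply Rinv_0_lt_compat; lra| lra]| lra|].
  exists (bad_cover n0 K0). split.
  - intros x [HX Hn]. apply NNPP. intros Hnc. apply Hn.
    destruct (inX_address x HX) as [d Hd].
    assert (Hdev : exists n0', forall n, (n0' <= n)%nat -> deviation (prefix d n) 0 ^ 4 <= bad_threshold n).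
    { exists n0. intros n Hn0. apply Rnot_lt_le. intros Hbad.
      exact (Hnc (bad_cover_catches n0 K0 x d n Hd Hn0 Hbad)). }
    split; [apply (typical_lower_ldim x d Hd Hdev)| apply (typical_upper_ldim x d Hd Hdev)].
  - intros L. eapply Rle_trans; [apply bad_cover_mass; unfold n0; lia|].
    specialize (HK0 K0 (le_n K0)).
    assert (6 * step_max ^ 4 * / sqrt (INR (n0 - 1)) <= eps / 2).
    { assert (0 < sqrt (INR (n0 - 1))) by lra.
      apply Rmult_le_reg_r with (sqrt (INR (n0 - 1))); auto.
      rewrite Rmult_assoc, Rinv_l by lra. unfold y in Hsq.
      assert (12 * step_max ^ 4 / eps * eps <= sqrt (INR (n0 - 1)) * eps) by (apply Rmult_le_compat_r; lra).
      replace (12 * step_max ^ 4 / eps * eps) with (12 * step_max ^ 4) in H1 by (field; lra). lra. }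
    lra.
Qed.

End Measure.

End CantorSet.

Theorem theorem2p1 (A B p q : R) (N : nat -> nat)
  (hB : 2 < B) (hAB : B < A)
  (hp : 0 < p <= 1 / 2) (hq : 0 < q <= 1 / 2)
  (hN0 : N 0%nat = 0%nat) (hNinc : forall i, (N i < N (S i))%nat)
  (hNratio : forall M : R, exists i0, forall i, (i0 <= i)%nat ->
               M < INR (N (S i)) / INR (N i))
  (hexp : - ln p / ln A < - ln (1 - q) / ln B) :
  (forall x, inX A B N x ->
     exists dl du, lower_ldim A B p q N x dl /\ upper_ldim A B p q N x du /\
       - ln (1 - p) / ln A <= dl <= - ln p / ln A /\
       - ln (1 - q) / ln B <= du <= - ln q / ln B) /\
  (forall x, inX A B N x -> forall dl du,
     lower_ldim A B p q N x dl -> upper_ldim A B p q N x du -> dl < du) /\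
  mu_null A B p q N (fun x => inX A B N x /\
     ~ (lower_ldim A B p q N x (entropy p / ln A) /\
        upper_ldim A B p q N x (entropy q / ln B))) /\
  (dimH (inX A B N) = ln 2 / ln A /\ dimP (inX A B N) = ln 2 / ln B /\
   dimH (inX A B N) < dimP (inX A B N)).
Proof.
  split; [|split; [|split]].
  - apply local_dims_bounds; assumption.
  - apply lower_ldim_lt_upper; assumption.
  - apply typical_ldims_ae; assumption.
  - apply dimensions; assumption.
Qed.
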